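(* Let $\mathbf f=(f_1,\dots,f_n)\in\mathcal G_0^n$ be strongly generic. Then $f_1,\dots,f_n$ can be extended to an infinite sequence $f_1,f_2,\dots$ in $\mathcal G_0$ such that $\{f_1^e,f_2^e,\dots\}$ is linearly independent and the restriction of the digraph $\Gamma_{\mathcal G}$ to $\{f_1,f_2,\dots\}$ is a universal tournament.
   Context: $\mathcal G$ is the group of strictly increasing continuous maps $f:[-1,1]\to[-1,1]$ with $f(\pm1)=\pm1$; $\mathcal G_0=\{f\in\mathcal G:\int_{-1}^1f=0\}$; $f^e(t)=\tfrac12(f(t)+f(-t))$; $Q(f,g)=\int_{-1}^1 f(g^{-1}(t))\,dt$. The digraph $\Gamma_{\mathcal G}$ on $\mathcal G$: $f\to g$ iff $Q(g,f)>0$. $\mathbf f\in\mathcal G_0^n$ is strongly generic if $\{f_1^e,\dots,f_n^e\}$ is linearly independent and $Q(f_i,f_j)\ne0$ for all $i\ne j$. A tournament $(T,U)$ ($U\subset T\times T$, no diagonal pairs, exactly one of $(i,j),(j,i)$ for distinct $i,j$) is universal if for every tournament $R$ on a countable set $S$, every finite $S_0\subset S$ and every embedding $\phi:R\cap(S_0\times S_0)\to U$ (an injective map with $i\to j$ iff $\phi(i)\to\phi(j)$), there is an embedding $\psi:R\to U$ agreeing with $\phi$ on $S_0$. *)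

From Stdlib Require Import Reals ClassicalEpsilon.
From Coquelicot Require Import Coquelicot.
Open Scope R_scope.

(* Functions [-1,1] -> [-1,1] are represented as R -> R; only their values on
   [-1,1] matter. *)
Definition inI (x : R) : Prop := -1 <= x <= 1.

Definition inG (f : R -> R) : Prop :=
  (forall x, inI x -> inI (f x)) /\
  (forall x y, inI x -> inI y -> x < y -> f x < f y) /\
  (forall x, inI x -> forall eps, 0 < eps -> exists delta, 0 < delta /\
      forall y, inI y -> Rabs (y - x) < delta -> Rabs (f y - f x) < eps) /\
  f (-1) = -1 /\ f 1 = 1.

Definition inG0 (f : R -> R) : Prop := inG f /\ RInt f (-1) 1 = 0.

Definition feven (f : R -> R) : R -> R := fun t => (f t + f (- t)) / 2.

(* inverse of g on [-1,1]: the point x in [-1,1] with g x = t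
   (unique when g is in G and t in [-1,1]) *)
Definition ginv (g : R -> R) (t : R) : R :=
  epsilon (inhabits 0) (fun x => inI x /\ g x = t).

Definition Q (f g : R -> R) : R := RInt (fun t => f (ginv g t)) (-1) 1.

Fixpoint lincomb (n : nat) (c : nat -> R) (h : nat -> R -> R) (t : R) : R :=
  match n with
  | O => 0
  | S m => lincomb m c h t + c m * h m t
  end.

Definition lin_indep_fin (n : nat) (h : nat -> R -> R) : Prop :=
  forall c : nat -> R,
    (forall t, inI t -> lincomb n c h t = 0) -> forall i, (i < n)%nat -> c i = 0.

Definition lin_indep_inf (h : nat -> R -> R) : Prop :=
  forall n, lin_indep_fin n h.

Definition strongly_generic (n : nat) (f : nat -> R -> R) : Prop :=
  (forall i, (i < n)%nat -> inG0 (f i)) /\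
  lin_indep_fin n (fun i => feven (f i)) /\
  (forall i j, (i < n)%nat -> (j < n)%nat -> i <> j -> Q (f i) (f j) <> 0).

Definition is_tournament {T : Type} (U : T -> T -> Prop) : Prop :=
  (forall i, ~ U i i) /\
  (forall i j, i <> j -> (U i j \/ U j i) /\ ~ (U i j /\ U j i)).

Definition countable_type (S : Type) : Prop :=
  exists c : S -> nat, forall x y, c x = c y -> x = y.

Definition finite_subset {S : Type} (S0 : S -> Prop) : Prop :=
  exists l : list S, forall x, S0 x <-> List.In x l.

Definition embedding_on {S T : Type} (S0 : S -> Prop)
    (R : S -> S -> Prop) (U : T -> T -> Prop) (phi : S -> T) : Prop :=
  (forall x y, S0 x -> S0 y -> phi x = phi y -> x = y) /\
  (forall x y, S0 x -> S0 y -> (R x y <-> U (phi x) (phi y))).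

Definition universal_tournament {T : Type} (U : T -> T -> Prop) : Prop :=
  is_tournament U /\
  forall (S : Type) (R : S -> S -> Prop), countable_type S -> is_tournament R ->
  forall (S0 : S -> Prop) (phi : S -> T), finite_subset S0 ->
    embedding_on S0 R U phi ->
    exists psi : S -> T, embedding_on (fun _ => True) R U psi /\
      forall x, S0 x -> psi x = phi x.

Definition Gamma_on (g : nat -> R -> R) (i j : nat) : Prop :=
  i <> j /\ Q (g j) (g i) > 0.

(* Given g_0, ..., g_(k-1) in G_0
   with independent even parts and a target sign for each Q(h, g_i), the new
   element is h = id + lam * sum_a w_a (x - c_a)_+, a finite sum of kinks with
   small lam.  Everything that has to be prescribed is linear in the measure
   w = sum_a w_a delta_(c_a): h(1) = 1 and int h = 0 are the moments of 1 - c
   and (1 - c)^2, Q(h, g_i) = lam (int (1 - c) dw - int (int_c^1 g_i) dw(c))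
   by Young's identity for g_i and its inverse, and independence of h^e is
   forced by pairing h^e with a measure Th that annihilates the old even
   parts.  These k + 3 functions of c are linearly independent (the one coming
   from Th has kinks, the others are C^1; differentiating, int g_i = 0 and the
   independence of the g_i^e dispose of the rest), so any moments, hence any
   signs, can be realised.  Scheduling every finite sign pattern through the
   Cantor pairing gives the extension property, and a forth construction turns
   it into universality; Q(f, g) + Q(g, f) = 0 on G (integration by parts) makes
   Gamma a tournament on the sequence. *)

From Stdlib Require Import Reals Lra Lia ClassicalEpsilon List Cantor.
From Coquelicot Require Import Coquelicot.
Open Scope R_scope.

Definition clamp (x : R) : R := Rmax (-1) (Rmin 1 x).

Lemma clamp_inI x : inI (clamp x).
Proof. unfold clamp, inI, Rmax, Rmin; repeat destruct Rle_dec; lra. Qed.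

Lemma clamp_id x : inI x -> clamp x = x.
Proof. unfold clamp, inI, Rmax, Rmin; intros; repeat destruct Rle_dec; lra. Qed.

Lemma clamp_lipschitz x y : Rabs (clamp y - clamp x) <= Rabs (y - x).
Proof.
  unfold clamp, Rmax, Rmin; repeat destruct Rle_dec; unfold Rabs; repeat destruct Rcase_abs; lra.
Qed.

Lemma inI_between a b x : inI a -> inI b -> Rmin a b <= x <= Rmax a b -> inI x.
Proof. unfold inI, Rmin, Rmax; destruct Rle_dec; lra. Qed.

Definition cont_I (f : R -> R) : Prop :=
  forall x, inI x -> forall eps, 0 < eps -> exists delta, 0 < delta /\
      forall y, inI y -> Rabs (y - x) < delta -> Rabs (f y - f x) < eps.

Lemma cont_I_clamp f : cont_I f -> forall z, continuous (fun x => f (clamp x)) z.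
Proof.
  intros H z. apply continuity_pt_filterlim, continuity_pt_locally. intro eps.
  destruct (H (clamp z) (clamp_inI z) eps (cond_pos eps)) as [d [dp Hd]].
  exists (mkposreal d dp). intros y Hy. apply Hd; [apply clamp_inI|].
  eapply Rle_lt_trans; [apply clamp_lipschitz | exact Hy].
Qed.

Lemma ex_RInt_cont_I f a b : cont_I f -> inI a -> inI b -> ex_RInt f a b.
Proof.
  intros H Ha Hb. apply ex_RInt_ext with (fun x => f (clamp x)).
  - intros x Hx. rewrite clamp_id; auto. apply (inI_between a b); auto; lra.
  - apply (ex_RInt_continuous (V:=R_CompleteNormedModule)). intros; apply cont_I_clamp; auto.
Qed.

Lemma cont_I_lipschitz f L : 0 <= L ->
  (forall x y, inI x -> inI y -> Rabs (f y - f x) <= L * Rabs (y - x)) -> cont_I f.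
Proof.
  intros HL H x Hx eps He. exists (eps / (L + 1)). split; [apply Rdiv_lt_0_compat; lra|].
  intros y Hy Hxy. eapply Rle_lt_trans; [apply H; auto|].
  apply Rle_lt_trans with ((L + 1) * Rabs (y - x)).
  - apply Rmult_le_compat_r; [apply Rabs_pos | lra].
  - replace eps with ((L + 1) * (eps / (L + 1))) by (field; lra).
    apply Rmult_lt_compat_l; lra.
Qed.

Lemma cont_I_const c : cont_I (fun _ => c).
Proof. apply cont_I_lipschitz with 0; [lra|]. intros. rewrite Rminus_diag, Rabs_R0. lra. Qed.

Lemma cont_I_id : cont_I (fun x => x).
Proof. apply cont_I_lipschitz with 1; [lra|]. intros. lra. Qed.

Lemma cont_I_plus f g : cont_I f -> cont_I g -> cont_I (fun x => f x + g x).
Proof.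
  intros Hf Hg x Hx eps He.
  destruct (Hf x Hx (eps / 2)) as [d1 [d1p H1]]; [lra|].
  destruct (Hg x Hx (eps / 2)) as [d2 [d2p H2]]; [lra|].
  exists (Rmin d1 d2). split; [apply Rmin_pos; auto|].
  intros y Hy Hxy.
  assert (A1 := H1 y Hy (Rlt_le_trans _ _ _ Hxy (Rmin_l _ _))).
  assert (A2 := H2 y Hy (Rlt_le_trans _ _ _ Hxy (Rmin_r _ _))).
  replace (f y + g y - (f x + g x)) with ((f y - f x) + (g y - g x)) by ring.
  eapply Rle_lt_trans; [apply Rabs_triang | lra].
Qed.

Lemma cont_I_scal c f : cont_I f -> cont_I (fun x => c * f x).
Proof.
  intros Hf x Hx eps He. pose proof (Rabs_pos c).
  destruct (Hf x Hx (eps / (Rabs c + 1))) as [d [dp H1]]; [apply Rdiv_lt_0_compat; lra|].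
  exists d. split; [exact dp|]. intros y Hy Hxy.
  replace (c * f y - c * f x) with (c * (f y - f x)) by ring. rewrite Rabs_mult.
  apply Rle_lt_trans with ((Rabs c + 1) * Rabs (f y - f x)).
  - apply Rmult_le_compat_r; [apply Rabs_pos | lra].
  - replace eps with ((Rabs c + 1) * (eps / (Rabs c + 1))) by (field; lra).
    apply Rmult_lt_compat_l; [lra | apply H1; auto].
Qed.

Lemma cont_I_comp f g : (forall x, inI x -> inI (g x)) -> cont_I g -> cont_I f ->
  cont_I (fun x => f (g x)).
Proof.
  intros Hin Hg Hf x Hx eps He.
  destruct (Hf (g x) (Hin x Hx) eps He) as [d1 [d1p H1]].
  destruct (Hg x Hx d1 d1p) as [d2 [d2p H2]].
  exists d2. split; [exact d2p|]. intros y Hy Hxy. apply H1; auto.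
Qed.

Lemma cont_I_ext f g : (forall x, inI x -> f x = g x) -> cont_I f -> cont_I g.
Proof.
  intros E Hf x Hx eps He. destruct (Hf x Hx eps He) as [d [dp H]].
  exists d. split; [exact dp|]. intros y Hy Hxy. rewrite <- !E; auto.
Qed.

Lemma cont_I_feven f : cont_I f -> cont_I (feven f).
Proof.
  intros Hf. apply cont_I_ext with (fun x => / 2 * (f x + f (- x))); [intros; unfold feven; field|].
  apply cont_I_scal, cont_I_plus; [exact Hf|].
  apply cont_I_comp; [intros x; unfold inI; lra | | exact Hf].
  apply cont_I_lipschitz with 1; [lra|]. intros.
  replace (- y - - x) with (- (y - x)) by ring. rewrite Rabs_Ropp. lra.
Qed.

Lemma cont_I_lincomb n c h : (forall i, (i < n)%nat -> cont_I (h i)) -> cont_I (lincomb n c h).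
Proof.
  induction n; intros H; simpl; [apply cont_I_const|].
  apply cont_I_plus; [apply IHn; intros; apply H; lia | apply cont_I_scal, H; lia].
Qed.

Section GroupG.

Variable b : R -> R.
Hypothesis Hb : inG b.

Lemma inG_inI x : inI x -> inI (b x).
Proof. apply Hb. Qed.

Lemma inG_lt x y : inI x -> inI y -> x < y -> b x < b y.
Proof. apply Hb. Qed.

Lemma inG_cont : cont_I b.
Proof. destruct Hb as [_ [_ [H _]]]. exact H. Qed.

Lemma inG_m1 : b (-1) = -1.
Proof. apply Hb. Qed.

Lemma inG_p1 : b 1 = 1.
Proof. apply Hb. Qed.

Lemma inG_le x y : inI x -> inI y -> x <= y -> b x <= b y.
Proof. intros Hx Hy [H|<-]; [left; apply inG_lt; auto | lra]. Qed.

Lemma inG_le_inv x y : inI x -> inI y -> b x <= b y -> x <= y.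
Proof.
  intros Hx Hy H. destruct (Rle_dec x y) as [?|Hn]; auto.
  assert (b y < b x) by (apply inG_lt; auto; lra). lra.
Qed.

Lemma inG_inj x y : inI x -> inI y -> b x = b y -> x = y.
Proof. intros Hx Hy H. apply Rle_antisym; apply inG_le_inv; auto; lra. Qed.

Lemma inG_surj t : inI t -> exists x, inI x /\ b x = t.
Proof.
  intros Ht.
  assert (Hm : inI (-1)) by (unfold inI; lra). assert (H1 : inI 1) by (unfold inI; lra).
  destruct (Req_dec t (-1)) as [->|Em]; [exists (-1); split; [exact Hm | apply inG_m1]|].
  destruct (Req_dec t 1) as [->|Ep]; [exists 1; split; [exact H1 | apply inG_p1]|].
  assert (Hc : continuity (fun x => b (clamp x) - t)).
  { intro z. apply continuity_pt_filterlim.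
    apply (cont_I_clamp (fun x => b x - t)), cont_I_plus; [apply inG_cont | apply cont_I_const]. }
  destruct (IVT _ (-1) 1 Hc) as [z [Hz Ez]].
  - lra.
  - rewrite clamp_id, inG_m1 by auto. unfold inI in Ht. lra.
  - rewrite clamp_id, inG_p1 by auto. unfold inI in Ht. lra.
  - rewrite clamp_id in Ez by (unfold inI; lra). exists z. split; [unfold inI|]; lra.
Qed.

Lemma ginv_spec t : inI t -> inI (ginv b t) /\ b (ginv b t) = t.
Proof. intros Ht. unfold ginv. apply epsilon_spec, inG_surj, Ht. Qed.

Lemma ginv_inI t : inI t -> inI (ginv b t).
Proof. apply ginv_spec. Qed.

Lemma inG_ginv t : inI t -> b (ginv b t) = t.
Proof. apply ginv_spec. Qed.

Lemma ginv_inG x : inI x -> ginv b (b x) = x.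
Proof.
  intros Hx. apply inG_inj; auto using ginv_inI, inG_inI. apply inG_ginv, inG_inI, Hx.
Qed.

Lemma ginv_le s t : inI s -> inI t -> s <= t -> ginv b s <= ginv b t.
Proof. intros Hs Ht H. apply inG_le_inv; auto using ginv_inI. rewrite !inG_ginv; auto. Qed.

(* [delta] is the distance from [t0] to the levels [b (x0 +- e/2)] (or [1] when
   [x0 +- e/2] leaves [[-1,1]]); within it, monotonicity keeps [ginv b] within
   [e/2] of [x0]. *)
Lemma cont_I_ginv : cont_I (ginv b).
Proof.
  intros t0 Ht0 eps He.
  set (x0 := ginv b t0).
  assert (Hx0 : inI x0) by (apply ginv_inI; auto).
  assert (Ebx0 : b x0 = t0) by (apply inG_ginv; auto).
  set (D1 := if Rle_dec (x0 + eps / 2) 1 then b (x0 + eps / 2) - t0 else 1).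
  set (D2 := if Rle_dec (-1) (x0 - eps / 2) then t0 - b (x0 - eps / 2) else 1).
  assert (P1 : 0 < D1).
  { unfold D1. destruct (Rle_dec (x0 + eps / 2) 1); [|lra]. rewrite <- Ebx0.
    assert (b x0 < b (x0 + eps / 2)) by (apply inG_lt; unfold inI in *; lra). lra. }
  assert (P2 : 0 < D2).
  { unfold D2. destruct (Rle_dec (-1) (x0 - eps / 2)); [|lra]. rewrite <- Ebx0.
    assert (b (x0 - eps / 2) < b x0) by (apply inG_lt; unfold inI in *; lra). lra. }
  exists (Rmin D1 D2). split; [apply Rmin_pos; auto|].
  intros t Ht Htt.
  assert (Hx : inI (ginv b t)) by (apply ginv_inI; auto).
  assert (Ebx : b (ginv b t) = t) by (apply inG_ginv; auto).
  assert (B1 : Rabs (t - t0) < D1) by (eapply Rlt_le_trans; [exact Htt | apply Rmin_l]).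
  assert (B2 : Rabs (t - t0) < D2) by (eapply Rlt_le_trans; [exact Htt | apply Rmin_r]).
  assert (L1 : ginv b t < x0 + eps / 2).
  { unfold D1 in B1. destruct (Rle_dec (x0 + eps / 2) 1); [|unfold inI in Hx; lra].
    destruct (Rlt_dec (ginv b t) (x0 + eps / 2)) as [q|q]; auto. exfalso.
    assert (b (x0 + eps / 2) <= b (ginv b t)) by (apply inG_le; unfold inI in *; lra).
    revert B1; unfold Rabs; destruct Rcase_abs; lra. }
  assert (L2 : x0 - eps / 2 < ginv b t).
  { unfold D2 in B2. destruct (Rle_dec (-1) (x0 - eps / 2)); [|unfold inI in Hx; lra].
    destruct (Rlt_dec (x0 - eps / 2) (ginv b t)) as [q|q]; auto. exfalso.
    assert (b (ginv b t) <= b (x0 - eps / 2)) by (apply inG_le; unfold inI in *; lra).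
    revert B2; unfold Rabs; destruct Rcase_abs; lra. }
  fold x0. unfold Rabs; destruct Rcase_abs; lra.
Qed.

End GroupG.

Lemma inG_id : inG (fun x => x).
Proof.
  split; [auto|]. split; [auto|]. split; [apply cont_I_id | split; reflexivity].
Qed.

(** * Integration by parts for two elements of G *)

Fixpoint sum_lt (N : nat) (f : nat -> R) : R :=
  match N with O => 0 | S M => sum_lt M f + f M end.

Lemma sum_lt_ext N f g : (forall k, (k < N)%nat -> f k = g k) -> sum_lt N f = sum_lt N g.
Proof. induction N; intros H; simpl; auto. rewrite IHN, H; auto; intros; apply H; lia. Qed.

Lemma sum_lt_zero N : sum_lt N (fun _ => 0) = 0.
Proof. induction N; simpl; auto. rewrite IHN; ring. Qed.

Lemma sum_lt_telescope N (f : nat -> R) d :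
  sum_lt N (fun k => (f (S k) - f k) * d) = d * (f N - f O).
Proof. induction N; simpl; [ring | rewrite IHN; ring]. Qed.

Lemma RInt_const_R (c s t : R) : RInt (fun _ => c) s t = c * (t - s).
Proof. rewrite RInt_const. unfold scal; simpl; unfold mult; simpl. ring. Qed.

Lemma RInt_bounds (F : R -> R) s t lo hi : s <= t -> ex_RInt F s t ->
  (forall y, s <= y <= t -> lo <= F y <= hi) ->
  lo * (t - s) <= RInt F s t <= hi * (t - s).
Proof.
  intros Hst Hex H. rewrite <- !RInt_const_R.
  split; apply RInt_le; auto using ex_RInt_const; intros; apply H; lra.
Qed.

(* On each cell [x k, x (S k)], [F] maps [[v (x k), v (x (S k))]] into
   [[u (x k), u (x (S k))]] and [H] does the converse, so the two integrals
   fill the staircase region up to the cells' rectangles. *)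
Lemma RInt_inverse_pair_bound (u v F H : R -> R) (x : nat -> R) (N : nat) :
  (forall k, (k < N)%nat -> u (x k) <= u (x (S k))) ->
  (forall k, (k < N)%nat -> v (x k) <= v (x (S k))) ->
  (forall k, (k < N)%nat -> forall t, v (x k) <= t <= v (x (S k)) -> u (x k) <= F t <= u (x (S k))) ->
  (forall k, (k < N)%nat -> forall t, u (x k) <= t <= u (x (S k)) -> v (x k) <= H t <= v (x (S k))) ->
  (forall k, (k < N)%nat -> ex_RInt F (v (x k)) (v (x (S k)))) ->
  (forall k, (k < N)%nat -> ex_RInt H (u (x k)) (u (x (S k)))) ->
  ex_RInt F (v (x O)) (v (x N)) /\ ex_RInt H (u (x O)) (u (x N)) /\
  Rabs (RInt F (v (x O)) (v (x N)) + RInt H (u (x O)) (u (x N))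
        - (u (x N) * v (x N) - u (x O) * v (x O)))
  <= sum_lt N (fun k => (u (x (S k)) - u (x k)) * (v (x (S k)) - v (x k))).
Proof.
  induction N; intros Hu Hv HF HH eF eH.
  - simpl. split; [apply ex_RInt_point|]. split; [apply ex_RInt_point|].
    rewrite !RInt_point. unfold zero; simpl. rewrite Rabs_right; lra.
  - destruct IHN as [I1 [I2 I3]]; try (intros k Hk; try intros t Ht;
      first [apply Hu | apply Hv | apply HF | apply HH | apply eF | apply eH]; auto; lia).
    assert (EF := eF N ltac:(lia)). assert (EH := eH N ltac:(lia)).
    split; [eapply ex_RInt_Chasles; eauto|].
    split; [eapply ex_RInt_Chasles; eauto|].
    rewrite <- (RInt_Chasles F _ (v (x N))), <- (RInt_Chasles H _ (u (x N))) by auto.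
    unfold plus; simpl.
    assert (B1 := RInt_bounds F _ _ _ _ (Hv N ltac:(lia)) EF (HF N ltac:(lia))).
    assert (B2 := RInt_bounds H _ _ _ _ (Hu N ltac:(lia)) EH (HH N ltac:(lia))).
    assert (Hd : 0 <= (u (x (S N)) - u (x N)) * (v (x (S N)) - v (x N))).
    { apply Rmult_le_pos; [assert (u (x N) <= u (x (S N))) by (apply Hu; lia)
                          |assert (v (x N) <= v (x (S N))) by (apply Hv; lia)]; lra. }
    revert I3. unfold Rabs. repeat destruct Rcase_abs; intros; nra.
Qed.

Lemma eq0_of_Rabs_le_div_succ E C : (forall N : nat, Rabs E <= C / (INR N + 1)) -> E = 0.
Proof.
  intros H. destruct (Req_dec E 0) as [?|Hn]; auto. exfalso.
  assert (HE : 0 < Rabs E) by (apply Rabs_pos_lt; auto).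
  destruct (INR_unbounded (C / Rabs E)) as [N HN].
  specialize (H N). pose proof (pos_INR N).
  assert (Rabs E * (INR N + 1) <= C).
  { apply Rmult_le_reg_r with (/ (INR N + 1)); [apply Rinv_0_lt_compat; lra|].
    rewrite Rmult_assoc, Rinv_r, Rmult_1_r by lra. exact H. }
  assert (C / Rabs E * Rabs E = C) by (field; lra).
  nra.
Qed.

Definition grid (y0 y1 : R) (N k : nat) : R := y0 + INR k * ((y1 - y0) / INR (S N)).

Lemma grid_0 y0 y1 N : grid y0 y1 N 0 = y0.
Proof. unfold grid; simpl; ring. Qed.

Lemma grid_last y0 y1 N : grid y0 y1 N (S N) = y1.
Proof. unfold grid. rewrite S_INR. pose proof (pos_INR N). field. lra. Qed.

Lemma grid_step y0 y1 N k : grid y0 y1 N (S k) - grid y0 y1 N k = (y1 - y0) / INR (S N).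
Proof. unfold grid. rewrite (S_INR k). ring. Qed.

Lemma grid_le_succ y0 y1 N k : y0 <= y1 -> grid y0 y1 N k <= grid y0 y1 N (S k).
Proof.
  intros H. assert (0 <= (y1 - y0) / INR (S N)).
  { apply Rdiv_le_0_compat; [lra | rewrite S_INR; pose proof (pos_INR N); lra]. }
  pose proof (grid_step y0 y1 N k). lra.
Qed.

Lemma grid_inI y0 y1 N k : inI y0 -> inI y1 -> y0 <= y1 -> (k <= S N)%nat ->
  inI (grid y0 y1 N k).
Proof.
  intros H0 H1 Hle Hk. unfold grid. rewrite S_INR. pose proof (pos_INR N). pose proof (pos_INR k).
  assert (Hk' : INR k <= INR N + 1) by (rewrite <- S_INR; apply le_INR; auto).
  assert (0 <= INR k / (INR N + 1) <= 1).
  { split; [apply Rdiv_le_0_compat; lra|].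
    apply Rmult_le_reg_r with (INR N + 1); [lra|].
    unfold Rdiv. rewrite Rmult_assoc, Rinv_l by lra. lra. }
  replace (INR k * ((y1 - y0) / (INR N + 1))) with ((y1 - y0) * (INR k / (INR N + 1))) by (field; lra).
  unfold inI in *. nra.
Qed.

Lemma cont_I_comp_ginv f b : inG b -> cont_I f -> cont_I (fun t => f (ginv b t)).
Proof. intros Hb Hf. apply cont_I_comp; auto using ginv_inI, cont_I_ginv. Qed.

Lemma comp_ginv_between a b x x' t : inG a -> inG b -> inI x -> inI x' ->
  a x <= t <= a x' -> b x <= b (ginv a t) <= b x'.
Proof.
  intros Ha Hb Hx Hx' Ht.
  assert (inI t) by (pose proof (inG_inI a Ha x Hx); pose proof (inG_inI a Ha x' Hx'); unfold inI in *; lra).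
  split; apply inG_le; auto using ginv_inI.
  - rewrite <- (ginv_inG a Ha x) by auto. apply ginv_le; auto using inG_inI; lra.
  - rewrite <- (ginv_inG a Ha x') by auto. apply ginv_le; auto using inG_inI; lra.
Qed.

(* Riemann sums over the partition [x k = ginv a (grid (a c) 1 N k)]; the
   error is at most [(1 - a c) (1 - b c) / (N + 1)]. *)
Lemma RInt_comp_ginv_by_parts a b c : inG a -> inG b -> inI c ->
  RInt (fun t => b (ginv a t)) (a c) 1 + RInt (fun t => a (ginv b t)) (b c) 1 = 1 - a c * b c.
Proof.
  intros Ha Hb Hc.
  assert (Hac : inI (a c)) by (apply inG_inI; auto).
  assert (H1 : inI 1) by (unfold inI; lra).
  assert (Hac1 : a c <= 1) by (unfold inI in Hac; lra).
  cut (RInt (fun t => b (ginv a t)) (a c) 1 + RInt (fun t => a (ginv b t)) (b c) 1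
       - (1 - a c * b c) = 0); [lra|].
  apply eq0_of_Rabs_le_div_succ with ((1 - a c) * (1 - b c)). intro N.
  set (y := grid (a c) 1 N).
  set (x := fun k => ginv a (y k)).
  assert (Yin : forall k, (k <= S N)%nat -> inI (y k)) by (intros; apply grid_inI; auto).
  assert (Xin : forall k, (k <= S N)%nat -> inI (x k)) by (intros; apply ginv_inI; auto).
  assert (Vx : forall k, (k <= S N)%nat -> a (x k) = y k) by (intros; apply inG_ginv; auto).
  assert (Xmono : forall k, (k < S N)%nat -> x k <= x (S k))
    by (intros; apply ginv_le, grid_le_succ; auto; apply Yin; lia).
  assert (Ex0 : x O = c) by (unfold x, y; rewrite grid_0; apply ginv_inG; auto).
  assert (ExN : x (S N) = 1) by (unfold x, y; rewrite grid_last, <- (inG_p1 a Ha) at 1; apply ginv_inG; auto).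
  destruct (RInt_inverse_pair_bound b a (fun t => b (ginv a t)) (fun t => a (ginv b t)) x (S N))
    as [_ [_ Hbd]]; try (intros k Hk; try intros t Ht).
  1, 2: apply inG_le; auto; apply Xin; lia.
  1, 2: apply comp_ginv_between; auto; apply Xin; lia.
  1, 2: apply ex_RInt_cont_I; [apply cont_I_comp_ginv; auto using inG_cont | ..];
          apply inG_inI; auto; apply Xin; lia.
  rewrite (sum_lt_ext _ _ (fun k => (b (x (S k)) - b (x k)) * ((1 - a c) / INR (S N)))) in Hbd
    by (intros k Hk; rewrite !Vx by lia; unfold y; rewrite grid_step; reflexivity).
  rewrite (sum_lt_telescope (S N) (fun k => b (x k))), !Vx, Ex0, ExN in Hbd by lia. unfold y in Hbd.
  rewrite grid_0, grid_last, (inG_p1 b Hb), S_INR in Hbd.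
  replace ((1 - a c) * (1 - b c) / (INR N + 1))
    with ((1 - a c) / (INR N + 1) * (1 - b c)) by (field; pose proof (pos_INR N); lra).
  replace (1 - a c * b c) with (1 * 1 - b c * a c) by ring. exact Hbd.
Qed.

Lemma RInt_ginv_tail b c : inG b -> inI c -> RInt (ginv b) (b c) 1 + RInt b c 1 = 1 - c * b c.
Proof.
  intros Hb Hc. rewrite <- (RInt_comp_ginv_by_parts (fun x => x) b c inG_id Hb Hc).
  rewrite Rplus_comm. f_equal. apply RInt_ext. intros t Ht.
  assert (Ht' : inI t) by (apply (inI_between c 1); auto; [unfold inI | ]; lra).
  pose proof (ginv_inG _ inG_id t Ht') as E. simpl in E. rewrite E. reflexivity.
Qed.

Lemma Q_antisym a b : inG a -> inG b -> Q a b + Q b a = 0.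
Proof.
  intros Ha Hb. assert (Hm : inI (-1)) by (unfold inI; lra).
  pose proof (RInt_comp_ginv_by_parts b a (-1) Hb Ha Hm) as E.
  rewrite (inG_m1 a Ha), (inG_m1 b Hb) in E. unfold Q. lra.
Qed.

(** * Finitely supported signed measures *)

(* A list of (weight, point) pairs. *)
Definition dmeasure := list (R * R).

Fixpoint dint (m : dmeasure) (u : R -> R) : R :=
  match m with nil => 0 | p :: m' => fst p * u (snd p) + dint m' u end.

Definition supported_in (P : R -> Prop) (m : dmeasure) : Prop := forall p, In p m -> P (snd p).

Definition dscale (a : R) (m : dmeasure) : dmeasure := map (fun p => (a * fst p, snd p)) m.

Fixpoint dcomb (N : nat) (a : nat -> R) (B : nat -> dmeasure) : dmeasure :=
  match N with O => nil | S M => dcomb M a B ++ dscale (a M) (B M) end.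

Definition kron (i j : nat) : R := if Nat.eqb i j then 1 else 0.

Lemma dint_app l1 l2 u : dint (l1 ++ l2) u = dint l1 u + dint l2 u.
Proof. induction l1; simpl; [ring | rewrite IHl1; ring]. Qed.

Lemma dint_scale a l u : dint (dscale a l) u = a * dint l u.
Proof. induction l; simpl; [ring | rewrite IHl; ring]. Qed.

Lemma dint_ext l u w : (forall p, In p l -> u (snd p) = w (snd p)) -> dint l u = dint l w.
Proof. induction l; simpl; intros H; auto. rewrite H, IHl; auto. Qed.

Lemma dint_lin l al be f g :
  dint l (fun t => al * f t + be * g t) = al * dint l f + be * dint l g.
Proof. induction l; simpl; [ring | rewrite IHl; ring]. Qed.

Lemma dint_zero l : dint l (fun _ => 0) = 0.
Proof. induction l; simpl; [ring | rewrite IHl; ring]. Qed.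

Lemma dint_dcomb N a B u : dint (dcomb N a B) u = sum_lt N (fun l => a l * dint (B l) u).
Proof. induction N; simpl; auto. rewrite dint_app, dint_scale, IHN. reflexivity. Qed.

Lemma dint_lincomb_zero A n c h :
  (forall i, (i < n)%nat -> dint A (h i) = 0) -> dint A (lincomb n c h) = 0.
Proof.
  induction n; intros H; simpl; [apply dint_zero|].
  transitivity (dint A (fun t => 1 * lincomb n c h t + c n * h n t)); [apply dint_ext; intros; ring|].
  rewrite dint_lin, IHn, H by (auto; intros; apply H; lia). ring.
Qed.

Lemma dint_swap A B (phi : R -> R -> R) :
  dint A (fun c => dint B (fun t => phi c t)) = dint B (fun t => dint A (fun c => phi c t)).
Proof.
  induction A as [|p A IH]; simpl; [rewrite dint_zero; auto|].
  rewrite IH.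
  transitivity (dint B (fun t => fst p * phi (snd p) t + 1 * dint A (fun c => phi c t))).
  - rewrite dint_lin. change (fun t => phi (snd p) t) with (phi (snd p)). ring.
  - apply dint_ext; intros; ring.
Qed.

Lemma sum_lt_kron N c j : (j < N)%nat -> sum_lt N (fun l => c l * kron l j) = c j.
Proof.
  unfold kron. induction N; intros H; simpl; [lia|].
  destruct (Nat.eq_dec j N) as [->|Hne].
  - rewrite Nat.eqb_refl, (sum_lt_ext N _ (fun _ => 0)), sum_lt_zero; [ring|].
    intros k Hk. destruct (Nat.eqb_spec k N); [lia | ring].
  - rewrite IHN by lia. destruct (Nat.eqb_spec N j); [lia | ring].
Qed.

Lemma dint_dcomb_basis N a B (F : nat -> R -> R) j :
  (forall l, (l < N)%nat -> dint (B l) (F j) = kron l j) -> (j < N)%nat ->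
  dint (dcomb N a B) (F j) = a j.
Proof.
  intros HB Hj. rewrite dint_dcomb, <- (sum_lt_kron N a j Hj).
  apply sum_lt_ext. intros l Hl. rewrite HB; auto.
Qed.

Lemma supported_in_app P l1 l2 :
  supported_in P l1 -> supported_in P l2 -> supported_in P (l1 ++ l2).
Proof. intros H1 H2 p Hp. apply in_app_or in Hp. destruct Hp; auto. Qed.

Lemma supported_in_dscale P a l : supported_in P l -> supported_in P (dscale a l).
Proof.
  intros H p Hp. unfold dscale in Hp. apply in_map_iff in Hp.
  destruct Hp as [q [<- Hq]]. exact (H q Hq).
Qed.

Lemma supported_in_dcomb P N a B :
  (forall l, (l < N)%nat -> supported_in P (B l)) -> supported_in P (dcomb N a B).
Proof.
  induction N; intros H; simpl; [intros p []|].
  apply supported_in_app; [apply IHN; intros; apply H; lia | apply supported_in_dscale, H; lia].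
Qed.

Lemma supported_in_impl (P P' : R -> Prop) l :
  (forall x, P x -> P' x) -> supported_in P l -> supported_in P' l.
Proof. intros H Hl p Hp. apply H, Hl, Hp. Qed.

Lemma sum_lt_opp N f : sum_lt N (fun l => - f l) = - sum_lt N f.
Proof. induction N; simpl; [ring | rewrite IHN; ring]. Qed.

Lemma lincomb_sum_lt n c h t : lincomb n c h t = sum_lt n (fun i => c i * h i t).
Proof. induction n; simpl; auto. rewrite IHn; auto. Qed.

Lemma lincomb_ext_c n c c' h t :
  (forall i, (i < n)%nat -> c i = c' i) -> lincomb n c h t = lincomb n c' h t.
Proof. induction n; simpl; intros H; auto. rewrite IHn, (H n); auto. Qed.

Lemma lincomb_ext_h n c h h' t :
  (forall i, (i < n)%nat -> h i t = h' i t) -> lincomb n c h t = lincomb n c h' t.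
Proof. induction n; simpl; intros H; auto. rewrite IHn, (H n); auto. Qed.

Lemma lincomb_ext_pt n c h t t' :
  (forall i, (i < n)%nat -> h i t = h i t') -> lincomb n c h t = lincomb n c h t'.
Proof. induction n; simpl; intros H; auto. rewrite IHn, (H n); auto. Qed.

Lemma lin_indep_fin_ext n h h' :
  (forall i t, (i < n)%nat -> h i t = h' i t) -> lin_indep_fin n h -> lin_indep_fin n h'.
Proof.
  intros E Hh c Hc. apply Hh. intros t Ht. rewrite <- (Hc t Ht). apply lincomb_ext_h. auto.
Qed.

(** * Linear relations versus interpolation *)

Definition interpolating (P : R -> Prop) (N : nat) (F : nat -> R -> R) : Prop :=
  forall y : nat -> R, exists A, supported_in P A /\ forall l, (l < N)%nat -> dint A (F l) = y l.

Lemma interpolation_basis P N F : interpolating P N F ->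
  exists B : nat -> dmeasure, forall l, supported_in P (B l) /\
    forall j, (j < N)%nat -> dint (B l) (F j) = kron l j.
Proof.
  intros H. apply (choice (fun l B => supported_in P B /\
                                      forall j, (j < N)%nat -> dint B (F j) = kron l j)).
  intros l. apply H.
Qed.

Lemma relation_or_interpolating (P : R -> Prop) (F : nat -> R -> R) (N : nat) :
  (exists d : nat -> R, (exists l, (l < N)%nat /\ d l <> 0) /\
      forall x, P x -> lincomb N d F x = 0)
  \/ interpolating P N F.
Proof.
  induction N.
  - right. intros y. exists nil. split; [intros p [] | intros; lia].
  - destruct IHN as [[d [[l [Hl Hdl]] Hs]] | Hs].
    + left. exists (fun j => if Nat.eqb j N then 0 else d j). split.
      * exists l. split; [lia|]. destruct (Nat.eqb_spec l N); [lia | auto].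
      * intros x Px. simpl. rewrite Nat.eqb_refl, Rmult_0_l, Rplus_0_r, <- (Hs x Px).
        apply lincomb_ext_c. intros k Hk. destruct (Nat.eqb_spec k N); [lia | auto].
    + destruct (interpolation_basis P N F Hs) as [B HB].
      set (lam := fun l => dint (B l) (F N)).
      destruct (classic (exists x, P x /\ F N x - sum_lt N (fun l => F l x * lam l) <> 0))
        as [[x0 [Px0 Hx0]] | Hno].
      * right. intros y. destruct (Hs y) as [A [AP AV]].
        set (C := (1, x0) :: dcomb N (fun l => - F l x0) B).
        assert (CV : forall j, (j < N)%nat -> dint C (F j) = 0).
        { intros j Hj. simpl.
          rewrite dint_dcomb_basis by (auto; intros; apply (proj2 (HB _)); auto). ring. }
        assert (CN : dint C (F N) = F N x0 - sum_lt N (fun l => F l x0 * lam l)).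
        { simpl. rewrite dint_dcomb, (sum_lt_ext N _ (fun l => - (F l x0 * lam l))), sum_lt_opp;
            [ring | intros; unfold lam; ring]. }
        exists (A ++ dscale ((y N - dint A (F N)) / dint C (F N)) C). split.
        -- apply supported_in_app; [exact AP|]. apply supported_in_dscale.
           intros p [<-|Hp]; [exact Px0|]. revert p Hp. apply supported_in_dcomb. intros; apply HB.
        -- intros j Hj. rewrite dint_app, dint_scale.
           destruct (Nat.eq_dec j N) as [->|Hne].
           ++ field. rewrite CN. exact Hx0.
           ++ rewrite (CV j), (AV j) by lia. ring.
      * left. exists (fun j => if Nat.eqb j N then 1 else - lam j). split.
        -- exists N. split; [lia|]. rewrite Nat.eqb_refl. lra.
        -- intros x Px. simpl. rewrite Nat.eqb_refl.
           assert (E : F N x - sum_lt N (fun l => F l x * lam l) = 0).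
           { apply NNPP. intro Hn. apply Hno. exists x. auto. }
           rewrite <- E, lincomb_sum_lt, (sum_lt_ext N _ (fun l => - (F l x * lam l))), sum_lt_opp.
           ++ ring.
           ++ intros k Hk. destruct (Nat.eqb_spec k N); [lia | ring].
Qed.

Definition ramp (c x : R) : R := Rmax (x - c) 0.

(* As a function of [c], [kink_sum l] has a kink of size [dmass l t] at each atom [t] of [l]. *)
Definition kink_sum (l : dmeasure) (c : R) : R := dint l (ramp c).

Definition atom (s t : R) : R := if Req_EM_T t s then 1 else 0.

Definition dmass (l : dmeasure) (s : R) : R := dint l (atom s).

Definition dremove (s : R) (l : dmeasure) : dmeasure :=
  filter (fun p => if Req_EM_T (snd p) s then false else true) l.

Lemma dint_split_atom l s u : dint l u = dmass l s * u s + dint (dremove s l) u.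
Proof.
  induction l as [|[w t] l IH]; unfold dmass, dremove, atom in *; simpl; [ring|].
  destruct (Req_EM_T t s) as [->|]; simpl; rewrite IH; ring.
Qed.

Lemma dremove_length s l : (length (dremove s l) <= length l)%nat.
Proof.
  induction l as [|[w t] l IH]; unfold dremove in *; simpl; [lia|].
  destruct (Req_EM_T t s); simpl; lia.
Qed.

Lemma kink_sum_second_difference l s : exists h0, 0 < h0 /\ forall h, 0 < h < h0 ->
  kink_sum l (s + h) + kink_sum l (s - h) - 2 * kink_sum l s = h * dmass l s.
Proof.
  induction l as [|[w t] l IH].
  - exists 1. split; [lra|]. intros. unfold kink_sum, dmass. simpl. ring.
  - destruct IH as [h0 [h0p IH]]. unfold kink_sum, dmass, atom in *. simpl.
    destruct (Req_EM_T t s) as [->|Hts].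
    + exists h0. split; auto. intros h Hh. specialize (IH h Hh).
      assert (ramp (s + h) s = 0) by (unfold ramp, Rmax; destruct Rle_dec; lra).
      assert (ramp (s - h) s = h) by (unfold ramp, Rmax; destruct Rle_dec; lra).
      assert (ramp s s = 0) by (unfold ramp, Rmax; destruct Rle_dec; lra).
      nra.
    + exists (Rmin h0 (Rabs (t - s))). split; [apply Rmin_pos; auto; apply Rabs_pos_lt; lra|].
      intros h Hh. pose proof (Rmin_l h0 (Rabs (t - s))). pose proof (Rmin_r h0 (Rabs (t - s))).
      specialize (IH h ltac:(lra)).
      assert (ramp (s + h) t + ramp (s - h) t - 2 * ramp s t = 0).
      { assert (Ht : h < Rabs (t - s)) by lra. unfold ramp, Rmax. revert Ht. unfold Rabs.
        destruct Rcase_abs; intros; repeat destruct Rle_dec; lra. }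
      nra.
Qed.

(* A derivative at [s] forces the symmetric second difference to be [o(h)]. *)
Lemma dmass_eq0_of_derivable l s D : is_derive (kink_sum l) s D -> dmass l s = 0.
Proof.
  intros Hd. apply is_derive_Reals in Hd.
  destruct (Req_dec (dmass l s) 0) as [?|HW]; auto. exfalso.
  assert (HWp : 0 < Rabs (dmass l s)) by (apply Rabs_pos_lt; auto).
  destruct (Hd (Rabs (dmass l s) / 4)) as [delta Hdel]; [lra|].
  destruct (kink_sum_second_difference l s) as [h0 [h0p Hsd]].
  set (h := Rmin delta h0 / 2).
  assert (hp : 0 < h) by (unfold h; pose proof (Rmin_pos _ _ (cond_pos delta) h0p); lra).
  assert (hd : h < delta) by (unfold h; pose proof (Rmin_l delta h0); pose proof (cond_pos delta); lra).
  assert (hh : h < h0) by (unfold h; pose proof (Rmin_r delta h0); lra).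
  assert (A1 := Hdel h ltac:(lra) ltac:(rewrite Rabs_right; lra)).
  assert (A2 := Hdel (- h) ltac:(lra) ltac:(rewrite Rabs_left; lra)).
  assert (E := Hsd h ltac:(lra)).
  replace (s + - h) with (s - h) in A2 by ring.
  set (a1 := (kink_sum l (s + h) - kink_sum l s) / h) in *.
  set (b1 := (kink_sum l (s - h) - kink_sum l s) / - h) in *.
  assert (EW : dmass l s = a1 - b1).
  { unfold a1, b1. apply Rmult_eq_reg_l with h; [|lra]. rewrite <- E. field. lra. }
  assert (Rabs (dmass l s) <= Rabs (a1 - D) + Rabs (b1 - D)).
  { rewrite EW. replace (a1 - b1) with ((a1 - D) + - (b1 - D)) by ring.
    eapply Rle_trans; [apply Rabs_triang | rewrite Rabs_Ropp; lra]. }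
  lra.
Qed.

Lemma dint_eq0_of_kink_sum_derivable l :
  supported_in (fun t => 0 < t < 1) l ->
  (forall s, 0 < s < 1 -> exists D, is_derive (kink_sum l) s D) -> forall u, dint l u = 0.
Proof.
  remember (length l) as n eqn:En. assert (Hn : (length l <= n)%nat) by lia. clear En.
  revert l Hn. induction n; intros l Hlen Hp Hd u.
  - destruct l; simpl in *; [auto | lia].
  - destruct l as [|[w t] l']; [reflexivity|].
    assert (Ht : 0 < t < 1) by (apply (Hp (w, t)); simpl; auto).
    destruct (Hd t Ht) as [D HD].
    assert (W0 := dmass_eq0_of_derivable _ _ _ HD).
    rewrite (dint_split_atom _ t u), W0, Rmult_0_l, Rplus_0_l.
    apply IHn.
    + assert (E : dremove t ((w, t) :: l') = dremove t l').
      { unfold dremove; simpl. destruct (Req_EM_T t t); [auto | congruence]. }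
      rewrite E. pose proof (dremove_length t l'). simpl in Hlen. lia.
    + intros p Hin. apply Hp. unfold dremove in Hin. apply filter_In in Hin. tauto.
    + intros s Hs. destruct (Hd s Hs) as [D' HD']. exists D'.
      apply is_derive_ext with (kink_sum ((w, t) :: l')); auto.
      intro c. unfold kink_sum. rewrite (dint_split_atom _ t), W0, Rmult_0_l, Rplus_0_l. reflexivity.
Qed.

(** * Perturbing the identity by kinks *)

Lemma RInt_plus_R (f g : R -> R) a b : ex_RInt f a b -> ex_RInt g a b ->
  RInt (fun x => f x + g x) a b = RInt f a b + RInt g a b.
Proof. intros. apply (RInt_plus (V:=R_CompleteNormedModule)); auto. Qed.

Lemma RInt_scal_R (f : R -> R) a b c : ex_RInt f a b ->
  RInt (fun x => c * f x) a b = c * RInt f a b.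
Proof. intros. apply (RInt_scal (V:=R_CompleteNormedModule)); auto. Qed.

Lemma RInt_shifted_id c s t : RInt (fun x => x - c) s t = ((t - c) ^ 2 - (s - c) ^ 2) / 2.
Proof.
  apply is_RInt_unique.
  replace (((t - c) ^ 2 - (s - c) ^ 2) / 2)
    with (minus ((fun x => (x - c) ^ 2 / 2) t) ((fun x => (x - c) ^ 2 / 2) s))
    by (unfold minus, plus, opp; simpl; field).
  apply (is_RInt_derive (V:=R_CompleteNormedModule) (fun x => (x - c) ^ 2 / 2) (fun x => x - c)).
  - intros x _. auto_derive; [auto|]. change (1 * ((1 + 1) * ((x + - c) * 1)) * / 2 = x - c). field.
  - intros x _. apply (continuous_minus (K:=R_AbsRing) (V:=R_NormedModule));
      [apply continuous_id | apply continuous_const].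
Qed.

Lemma RInt_id_sym : RInt (fun x => x) (-1) 1 = 0.
Proof.
  rewrite (RInt_ext (fun x => x) (fun x => x - 0)) by (intros; simpl; ring).
  rewrite RInt_shifted_id. simpl. field.
Qed.

Lemma ramp_lipschitz c x y : Rabs (ramp c y - ramp c x) <= Rabs (y - x).
Proof. unfold ramp, Rmax; repeat destruct Rle_dec; unfold Rabs; repeat destruct Rcase_abs; lra. Qed.

Lemma cont_I_ramp c : cont_I (ramp c).
Proof. apply cont_I_lipschitz with 1; [lra|]. intros. rewrite Rmult_1_l. apply ramp_lipschitz. Qed.

Lemma ramp_left c x : x <= c -> ramp c x = 0.
Proof. intros; unfold ramp, Rmax; destruct Rle_dec; lra. Qed.

Lemma ramp_right c x : c <= x -> ramp c x = x - c.
Proof. intros; unfold ramp, Rmax; destruct Rle_dec; lra. Qed.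

Lemma RInt_ramp c : inI c -> RInt (ramp c) (-1) 1 = (1 - c) ^ 2 / 2.
Proof.
  intros Hc. assert (Hm : inI (-1)) by (unfold inI; lra). assert (H1 : inI 1) by (unfold inI; lra).
  rewrite <- (RInt_Chasles (V:=R_CompleteNormedModule) (ramp c) (-1) c 1)
    by (apply ex_RInt_cont_I; auto using cont_I_ramp).
  rewrite (RInt_ext (ramp c) (fun _ => 0) (-1) c), (RInt_ext (ramp c) (fun x => x - c) c 1).
  - rewrite RInt_const_R, RInt_shifted_id. unfold plus; simpl. field.
  - intros x Hx. apply ramp_right. unfold inI in Hc. unfold Rmin, Rmax in Hx; destruct Rle_dec; lra.
  - intros x Hx. apply ramp_left. unfold inI in Hc. unfold Rmin, Rmax in Hx; destruct Rle_dec; lra.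
Qed.

Lemma RInt_ramp_ginv b c : inG b -> inI c ->
  RInt (fun t => ramp c (ginv b t)) (-1) 1 = 1 - c - RInt b c 1.
Proof.
  intros Hb Hc. assert (Hm : inI (-1)) by (unfold inI; lra). assert (H1 : inI 1) by (unfold inI; lra).
  assert (Hbc : inI (b c)) by (apply inG_inI; auto).
  assert (Rc : cont_I (fun t => ramp c (ginv b t)))
    by (apply cont_I_comp_ginv; auto using cont_I_ramp).
  rewrite <- (RInt_Chasles (V:=R_CompleteNormedModule) _ (-1) (b c) 1) by (apply ex_RInt_cont_I; auto).
  rewrite (RInt_ext _ (fun _ => 0) (-1) (b c)), (RInt_ext _ (fun t => ginv b t - c) (b c) 1).
  - rewrite RInt_const_R, (RInt_minus (V:=R_CompleteNormedModule) (ginv b) (fun _ => c)),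
      RInt_const_R by (auto using ex_RInt_const, ex_RInt_cont_I, cont_I_ginv).
    unfold minus, opp; simpl. unfold plus; simpl. pose proof (RInt_ginv_tail b c Hb Hc). lra.
  - intros x Hx. assert (Hx' : inI x) by (apply (inI_between (b c) 1); auto; lra).
    apply ramp_right. rewrite <- (ginv_inG b Hb c) at 1 by auto.
    apply ginv_le; auto. unfold Rmin, Rmax in Hx; destruct Rle_dec; unfold inI in *; lra.
  - intros x Hx. assert (Hx' : inI x) by (apply (inI_between (-1) (b c)); auto; lra).
    apply ramp_left. rewrite <- (ginv_inG b Hb c) by auto.
    apply ginv_le; auto. unfold Rmin, Rmax in Hx; destruct Rle_dec; unfold inI in *; lra.
Qed.

Fixpoint dvar (l : dmeasure) : R :=
  match l with nil => 0 | p :: l' => Rabs (fst p) + dvar l' end.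

Lemma dvar_nonneg l : 0 <= dvar l.
Proof. induction l; simpl; [lra | pose proof (Rabs_pos (fst a)); lra]. Qed.

Lemma dint_ramp_lipschitz A x y :
  Rabs (dint A (fun c => ramp c y) - dint A (fun c => ramp c x)) <= dvar A * Rabs (y - x).
Proof.
  induction A as [|[w c] A IH]; simpl; [rewrite Rminus_diag, Rabs_R0; lra|].
  replace (w * ramp c y + dint A (fun c0 => ramp c0 y) - (w * ramp c x + dint A (fun c0 => ramp c0 x)))
    with (w * (ramp c y - ramp c x) + (dint A (fun c0 => ramp c0 y) - dint A (fun c0 => ramp c0 x)))
    by ring.
  eapply Rle_trans; [apply Rabs_triang|]. rewrite Rabs_mult.
  pose proof (ramp_lipschitz c x y). pose proof (Rabs_pos w).
  assert (Rabs w * Rabs (ramp c y - ramp c x) <= Rabs w * Rabs (y - x)) by (apply Rmult_le_compat_l; auto).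
  lra.
Qed.

Lemma cont_I_dint A (phi : R -> R -> R) : (forall p, In p A -> cont_I (phi (snd p))) ->
  cont_I (fun t => dint A (fun c => phi c t)).
Proof.
  induction A as [|p A IH]; intros H; simpl; [apply cont_I_const|].
  apply cont_I_plus; [apply cont_I_scal, H; simpl; auto | apply IH; intros; apply H; simpl; auto].
Qed.

Lemma RInt_dint A (phi : R -> R -> R) a b : inI a -> inI b ->
  (forall p, In p A -> cont_I (phi (snd p))) ->
  RInt (fun t => dint A (fun c => phi c t)) a b = dint A (fun c => RInt (phi c) a b).
Proof.
  intros Ha Hb. induction A as [|p A IH]; intros H; simpl; [rewrite RInt_const_R; ring|].
  assert (Hp : cont_I (phi (snd p))) by (apply H; simpl; auto).
  assert (HA : forall q, In q A -> cont_I (phi (snd q))) by (intros; apply H; simpl; auto).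
  rewrite RInt_plus_R, RInt_scal_R, IH by
    (auto; apply ex_RInt_cont_I; auto using cont_I_scal, cont_I_dint).
  reflexivity.
Qed.

Definition perturb (A : dmeasure) (lam : R) (x : R) : R := x + lam * dint A (fun c => ramp c x).

Definition interior (c : R) : Prop := -1 < c < 1.

Lemma perturb_m1 A lam : supported_in interior A -> perturb A lam (-1) = -1.
Proof.
  intros Hin. unfold perturb. rewrite (dint_ext A _ (fun _ => 0)), dint_zero; [ring|].
  intros p Hp. apply ramp_left. specialize (Hin p Hp). unfold interior in Hin. lra.
Qed.

Lemma perturb_p1 A lam : supported_in interior A -> dint A (fun c => 1 - c) = 0 ->
  perturb A lam 1 = 1.
Proof.
  intros Hin E1. unfold perturb. rewrite (dint_ext A _ (fun c => 1 - c)), E1; [ring|].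
  intros p Hp. apply ramp_right. specialize (Hin p Hp). unfold interior in Hin. lra.
Qed.

Lemma perturb_increment A lam x y : 0 <= lam ->
  Rabs (perturb A lam y - perturb A lam x - (y - x)) <= lam * dvar A * Rabs (y - x).
Proof.
  intros Hlam. unfold perturb.
  replace (y + lam * dint A (fun c => ramp c y) - (x + lam * dint A (fun c => ramp c x)) - (y - x))
    with (lam * (dint A (fun c => ramp c y) - dint A (fun c => ramp c x))) by ring.
  rewrite Rabs_mult, Rabs_right, Rmult_assoc by lra.
  apply Rmult_le_compat_l; [lra | apply dint_ramp_lipschitz].
Qed.

Lemma RInt_perturb A lam : supported_in interior A ->
  RInt (perturb A lam) (-1) 1 = lam / 2 * dint A (fun c => (1 - c) ^ 2).
Proof.
  intros Hin. assert (Hm : inI (-1)) by (unfold inI; lra). assert (H1 : inI 1) by (unfold inI; lra).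
  assert (Ra : forall p, In p A -> cont_I (ramp (snd p))) by (intros; apply cont_I_ramp).
  assert (Hd : cont_I (fun x => dint A (fun c => ramp c x))) by (apply (cont_I_dint A ramp); auto).
  unfold perturb.
  rewrite RInt_plus_R, RInt_scal_R, (RInt_dint A ramp), RInt_id_sym
    by (auto; apply ex_RInt_cont_I; auto using cont_I_id, cont_I_scal).
  rewrite (dint_ext A _ (fun c => / 2 * (1 - c) ^ 2 + 0 * 0)).
  - rewrite dint_lin, dint_zero. simpl. field.
  - intros p Hp. rewrite RInt_ramp; [field|]. specialize (Hin p Hp). unfold interior, inI in *. lra.
Qed.

Definition small_coef (A : dmeasure) : R := / (2 * (1 + dvar A)).

Lemma small_coef_pos A : 0 < small_coef A.
Proof. unfold small_coef. pose proof (dvar_nonneg A). apply Rinv_0_lt_compat. lra. Qed.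

Lemma small_coef_dvar A : small_coef A * dvar A <= 1 / 2.
Proof.
  unfold small_coef. pose proof (dvar_nonneg A).
  apply Rmult_le_reg_l with (2 * (1 + dvar A)); [lra|].
  rewrite <- Rmult_assoc, Rinv_r by lra. lra.
Qed.

Lemma perturb_inG0 A : supported_in interior A ->
  dint A (fun c => 1 - c) = 0 -> dint A (fun c => (1 - c) ^ 2) = 0 ->
  inG0 (perturb A (small_coef A)).
Proof.
  intros Hin E1 E2. set (lam := small_coef A).
  assert (Hlam : 0 < lam) by apply small_coef_pos.
  assert (Hld : lam * dvar A <= 1 / 2) by apply small_coef_dvar.
  pose proof (dvar_nonneg A).
  assert (Hinc : forall x y, x < y -> perturb A lam y - perturb A lam x >= (y - x) / 2).
  { intros x y Hxy. pose proof (perturb_increment A lam x y ltac:(lra)) as Hi.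
    rewrite (Rabs_right (y - x)) in Hi by lra.
    assert (lam * dvar A * (y - x) <= (y - x) / 2) by nra.
    revert Hi. unfold Rabs. destruct Rcase_abs; intros; lra. }
  assert (Hle : forall x y, x <= y -> perturb A lam x <= perturb A lam y).
  { intros x y [H'|<-]; [pose proof (Hinc x y H'); lra | lra]. }
  pose proof (perturb_m1 A lam Hin). pose proof (perturb_p1 A lam Hin E1).
  split; [split; [|split; [|split; [|split]]] |]; auto.
  - intros x Hx. unfold inI in *. split; [rewrite <- (perturb_m1 A lam Hin) | rewrite <- (perturb_p1 A lam Hin E1)];
      apply Hle; lra.
  - intros x y _ _ Hxy. pose proof (Hinc x y Hxy). lra.
  - apply cont_I_lipschitz with (1 + lam * dvar A); [nra|].
    intros x y _ _. pose proof (perturb_increment A lam x y ltac:(lra)) as Hi.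
    pose proof (Rabs_triang_inv (perturb A lam y - perturb A lam x) (y - x)). lra.
  - rewrite RInt_perturb, E2 by auto. simpl. ring.
Qed.

Lemma RInt_ginv_inG0 b : inG0 b -> RInt (ginv b) (-1) 1 = 0.
Proof.
  intros [Hb Hi]. assert (Hm : inI (-1)) by (unfold inI; lra).
  pose proof (RInt_ginv_tail b (-1) Hb Hm) as E. rewrite (inG_m1 b Hb), Hi in E. lra.
Qed.

Lemma Q_perturb A lam b : supported_in interior A -> inG0 b ->
  Q (perturb A lam) b = lam * (dint A (fun c => 1 - c) - dint A (fun c => RInt b c 1)).
Proof.
  intros Hin Hb. pose proof Hb as [Hg _].
  assert (Hm : inI (-1)) by (unfold inI; lra). assert (H1 : inI 1) by (unfold inI; lra).
  assert (Rc : forall p, In p A -> cont_I (fun t => ramp (snd p) (ginv b t)))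
    by (intros; apply cont_I_comp_ginv; auto using cont_I_ramp).
  assert (Rd : cont_I (fun t => dint A (fun c => ramp c (ginv b t))))
    by (apply (cont_I_dint A (fun c t => ramp c (ginv b t))); auto).
  unfold Q, perturb.
  rewrite RInt_plus_R, RInt_scal_R, (RInt_dint A (fun c t => ramp c (ginv b t))), RInt_ginv_inG0
    by (auto; apply ex_RInt_cont_I; auto using cont_I_ginv, cont_I_scal).
  rewrite (dint_ext A _ (fun c => 1 * (1 - c) + (-1) * RInt b c 1)); [rewrite (dint_lin A 1 (-1) (fun c => 1 - c) (fun c => RInt b c 1)); ring|].
  intros p Hp. rewrite RInt_ramp_ginv; [ring | auto |].
  specialize (Hin p Hp). unfold interior, inI in *; lra.
Qed.

Lemma feven_perturb A lam t : feven (perturb A lam) t = lam * dint A (fun c => feven (ramp c) t).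
Proof.
  unfold feven, perturb.
  rewrite (dint_ext A (fun c => (ramp c t + ramp c (- t)) / 2)
             (fun c => / 2 * ramp c t + / 2 * ramp c (- t))), dint_lin by (intros; field).
  field.
Qed.

(** * Independence of the probe functions *)

Lemma feven_inG_m1 g : inG g -> feven g (-1) = 0.
Proof. intros Hg. unfold feven. replace (- -1) with 1 by ring. rewrite inG_m1, inG_p1 by auto. field. Qed.

Lemma feven_inG_p1 g : inG g -> feven g 1 = 0.
Proof. intros Hg. unfold feven. replace (- 1) with (-1) by ring. rewrite inG_m1, inG_p1 by auto. field. Qed.

Lemma feven_opp g t : feven g (- t) = feven g t.
Proof. unfold feven. rewrite Ropp_involutive. field. Qed.

(* For even continuous functions vanishing at [1], a relation on [(0,1)]
   extends by symmetry and continuity to all of [[-1,1]]. *)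
Lemma lin_indep_on_01 k (F : nat -> R -> R) :
  (forall i, (i < k)%nat -> cont_I (F i)) ->
  (forall i t, (i < k)%nat -> F i (- t) = F i t) ->
  (forall i, (i < k)%nat -> F i 1 = 0) ->
  lin_indep_fin k F ->
  forall d, (forall x, 0 < x < 1 -> lincomb k d F x = 0) -> forall i, (i < k)%nat -> d i = 0.
Proof.
  intros Hc Hs H1 Hind d L01. apply Hind.
  set (L := lincomb k d F) in *.
  assert (LC : cont_I L) by (apply cont_I_lincomb; auto).
  assert (Lsym : forall t, L (- t) = L t) by (intros; apply lincomb_ext_pt; intros; apply Hs; auto).
  assert (L1 : L 1 = 0).
  { unfold L. rewrite lincomb_sum_lt, (sum_lt_ext k _ (fun _ => 0)), sum_lt_zero; auto.
    intros; rewrite H1; auto; ring. }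
  assert (L0 : L 0 = 0).
  { destruct (Req_dec (L 0) 0) as [?|Hn]; auto. exfalso.
    assert (Hp : 0 < Rabs (L 0)) by (apply Rabs_pos_lt; auto).
    destruct (LC 0 ltac:(unfold inI; lra) _ Hp) as [dl [dlp Hdl]].
    set (y := Rmin (dl / 2) (1 / 2)).
    assert (0 < y <= 1 / 2) by (unfold y; split; [apply Rmin_pos | apply Rmin_r]; lra).
    assert (y <= dl / 2) by apply Rmin_l.
    assert (Hy := Hdl y ltac:(unfold inI; lra) ltac:(rewrite Rminus_0_r, Rabs_right; lra)).
    rewrite L01, Rminus_0_l, Rabs_Ropp in Hy by lra. lra. }
  intros t Ht. unfold inI in Ht.
  destruct (Rtotal_order t 0) as [Hlt|[->|Hgt]]; auto.
  - rewrite <- Lsym. destruct (Req_dec t (-1)) as [->|E].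
    + replace (- -1) with 1 by ring. exact L1.
    + apply L01. lra.
  - destruct (Req_dec t 1) as [->|E]; auto. apply L01. lra.
Qed.

Lemma point_right_of_support (L : dmeasure) : supported_in (fun t => t < 1) L ->
  exists t, 0 < t < 1 /\ supported_in (fun s => s < t) L.
Proof.
  induction L as [|q L IH]; intros H.
  - exists (1 / 2). split; [lra | intros q []].
  - destruct IH as [t [Ht Hq]]; [intros p Hp; apply H; simpl; auto|].
    assert (snd q < 1) by (apply H; simpl; auto).
    exists (Rmax t ((1 + snd q) / 2)). split.
    + split; [eapply Rlt_le_trans; [|apply Rmax_l]; lra | unfold Rmax; destruct Rle_dec; lra].
    + intros q' [<-|E]; [eapply Rlt_le_trans; [|apply Rmax_r]; lra|].
      eapply Rlt_le_trans; [apply Hq, E | apply Rmax_l].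
Qed.

Lemma is_derive_plus_R (f g : R -> R) x a b : is_derive f x a -> is_derive g x b ->
  is_derive (fun y => f y + g y) x (a + b).
Proof. intros. apply (is_derive_plus (K:=R_AbsRing) (V:=R_NormedModule)); auto. Qed.

Lemma is_derive_lincomb k (d : nat -> R) (f : nat -> R -> R) (f' : nat -> R) x :
  (forall l, (l < k)%nat -> is_derive (f l) x (f' l)) ->
  is_derive (lincomb k d f) x (sum_lt k (fun l => d l * f' l)).
Proof.
  induction k; intros H; simpl; [apply (is_derive_const (K:=R_AbsRing) (V:=R_NormedModule))|].
  apply is_derive_plus_R; [apply IHk; intros; apply H; lia | apply is_derive_scal, H; lia].
Qed.

Lemma RInt_lincomb_zero k (d : nat -> R) (f : nat -> R -> R) a b : inI a -> inI b ->
  (forall l, (l < k)%nat -> cont_I (f l) /\ RInt (f l) a b = 0) -> RInt (lincomb k d f) a b = 0.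
Proof.
  intros Ha Hb. induction k; intros H; simpl; [rewrite RInt_const_R; ring|].
  assert (Hk : cont_I (f k) /\ RInt (f k) a b = 0) by (apply H; lia).
  assert (Hr : forall l, (l < k)%nat -> cont_I (f l) /\ RInt (f l) a b = 0) by (intros; apply H; lia).
  assert (E1 : ex_RInt (lincomb k d f) a b)
    by (apply ex_RInt_cont_I; auto; apply cont_I_lincomb; intros; apply Hr; auto).
  assert (E2 : ex_RInt (f k) a b) by (apply ex_RInt_cont_I; auto; apply Hk).
  assert (E3 : ex_RInt (fun x => d k * f k x) a b) by (apply ex_RInt_cont_I; auto; apply cont_I_scal, Hk).
  rewrite (RInt_plus_R _ _ a b E1 E3), (RInt_scal_R _ a b (d k) E2), IHk, (proj2 Hk) by exact Hr.
  ring.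
Qed.

(* [f (clamp x)] is continuous on all of [R], so [tail_int f] is differentiable everywhere. *)
Definition tail_int (f : R -> R) (c : R) : R := RInt (fun x => f (clamp x)) c 1.

Lemma is_derive_tail_int f : cont_I f -> forall c, is_derive (tail_int f) c (- f (clamp c)).
Proof.
  intros Hf c. unfold tail_int.
  apply (is_derive_RInt' (V:=R_NormedModule) (fun x => f (clamp x)) _ c 1).
  - apply filter_forall. intros a0. apply (RInt_correct (V:=R_CompleteNormedModule)).
    apply (ex_RInt_continuous (V:=R_CompleteNormedModule)). intros; apply cont_I_clamp; auto.
  - apply cont_I_clamp; auto.
Qed.

Lemma tail_int_eq f c : inI c -> tail_int f c = RInt f c 1.
Proof.
  intros Hc. unfold tail_int. apply RInt_ext. intros x Hx. rewrite clamp_id; auto.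
  apply (inI_between c 1); auto; [unfold inI | ]; lra.
Qed.

Lemma lincomb_tail_int_affine k (g : nat -> R -> R) d a b :
  (forall l, (l < k)%nat -> cont_I (g l)) ->
  (forall c, interior c -> lincomb k d (fun l => tail_int (g l)) c + a * (1 - c) + b * (1 - c) ^ 2 = 0) ->
  forall c, interior c -> lincomb k d g c = - a - 2 * b + 2 * b * c.
Proof.
  intros Hg H c Hc.
  set (S0 := fun c => lincomb k d (fun l => tail_int (g l)) c + (a * (1 - c) + b * (1 - c) ^ 2)).
  assert (D1 : is_derive S0 c (sum_lt k (fun l => d l * - g l (clamp c)) + (a * (-1) + b * (- (2 * (1 - c)))))).
  { apply is_derive_plus_R.
    - apply is_derive_lincomb. intros l Hl. apply is_derive_tail_int, Hg, Hl.
    - auto_derive; auto. ring. }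
  assert (D0 : is_derive S0 c 0).
  { apply is_derive_ext_loc with (fun _ => 0).
    - apply (locally_interval _ c (-1) 1); simpl; unfold interior in Hc; try lra.
      intros y Hy1 Hy2. unfold S0. rewrite <- Rplus_assoc, H; [reflexivity | unfold interior; lra].
    - apply (is_derive_const (K:=R_AbsRing) (V:=R_NormedModule)). }
  apply is_derive_unique in D0. apply is_derive_unique in D1. rewrite D0 in D1.
  rewrite clamp_id, (sum_lt_ext k _ (fun l => - (d l * g l c))), sum_lt_opp in D1
    by (intros; ring || (unfold interior, inI in *; lra)).
  rewrite lincomb_sum_lt. lra.
Qed.

Lemma tail_int_quadratic_independent k (g : nat -> R -> R) d a b :
  (forall i, (i < k)%nat -> inG0 (g i)) -> lin_indep_fin k (fun i => feven (g i)) ->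
  (forall c, interior c -> lincomb k d (fun l => tail_int (g l)) c + a * (1 - c) + b * (1 - c) ^ 2 = 0) ->
  (forall l, (l < k)%nat -> d l = 0) /\ a = 0 /\ b = 0.
Proof.
  intros HG Hind H.
  assert (Hc : forall l, (l < k)%nat -> cont_I (g l)) by (intros; apply inG_cont, HG; auto).
  assert (Hm : inI (-1)) by (unfold inI; lra). assert (H1 : inI 1) by (unfold inI; lra).
  pose proof (lincomb_tail_int_affine k g d a b Hc H) as Haff.
  assert (Hal : - a - 2 * b = 0).
  { assert (E : RInt (lincomb k d g) (-1) 1 = 0)
      by (apply RInt_lincomb_zero; auto; intros l Hl; split; [auto | apply HG, Hl]).
    rewrite (RInt_ext _ (fun c => (- a - 2 * b) + (2 * b) * c)) in E.
    2: { intros x Hx. apply Haff. unfold interior. unfold Rmin, Rmax in Hx; destruct Rle_dec; lra. }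
    rewrite RInt_plus_R, RInt_const_R, RInt_scal_R, RInt_id_sym in E
      by (apply ex_RInt_cont_I; auto using ex_RInt_const, cont_I_id, cont_I_const, cont_I_scal).
    simpl in E. lra. }
  assert (Hdl : forall l, (l < k)%nat -> d l = 0).
  { apply Hind. intros t Ht.
    destruct (Req_dec t 1) as [->|E]; [|destruct (Req_dec t (-1)) as [->|E']].
    - rewrite lincomb_sum_lt, (sum_lt_ext k _ (fun _ => 0)), sum_lt_zero; auto.
      intros l Hl. rewrite feven_inG_p1; [ring | apply HG, Hl].
    - rewrite lincomb_sum_lt, (sum_lt_ext k _ (fun _ => 0)), sum_lt_zero; auto.
      intros l Hl. rewrite feven_inG_m1; [ring | apply HG, Hl].
    - rewrite lincomb_sum_lt, (sum_lt_ext k _ (fun l => / 2 * (d l * g l t) + / 2 * (d l * g l (- t)))).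
      2: { intros; unfold feven; field. }
      assert (E2 : forall n, sum_lt n (fun l => / 2 * (d l * g l t) + / 2 * (d l * g l (- t)))
                  = / 2 * lincomb n d g t + / 2 * lincomb n d g (- t))
        by (induction n; simpl; [ring | rewrite IHn; ring]).
      rewrite E2, !Haff by (unfold interior, inI in *; lra). lra. }
  assert (Hq : forall c, interior c -> a * (1 - c) + b * (1 - c) ^ 2 = 0).
  { intros c Hc'. pose proof (H c Hc') as E.
    rewrite lincomb_sum_lt, (sum_lt_ext k _ (fun _ => 0)), sum_lt_zero in E
      by (intros l Hl; rewrite Hdl; auto; ring). lra. }
  pose proof (Hq 0 ltac:(unfold interior; lra)). pose proof (Hq (1 / 2) ltac:(unfold interior; lra)).
  split; [exact Hdl | split; nra].
Qed.

Definition even_kinks (Th : dmeasure) (c : R) : R := dint Th (fun t => feven (ramp c) t).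

Lemma even_kinks_eq Th c : supported_in (fun t => 0 < t < 1) Th -> 0 < c ->
  even_kinks Th c = / 2 * kink_sum Th c.
Proof.
  intros HTh Hc. unfold even_kinks, kink_sum.
  rewrite (dint_ext Th _ (fun t => / 2 * ramp c t + 0 * 0)), dint_lin, dint_zero; [ring|].
  intros q Hq. specialize (HTh q Hq). unfold feven. rewrite (ramp_left c (- snd q)) by lra. field.
Qed.

(* On [(0,1)], [even_kinks Th] is half of [kink_sum Th], whose kink at [t0] no
   differentiable function can cancel. *)
Lemma even_kinks_coef_eq0 Th t0 (S0 : R -> R) e :
  supported_in (fun t => 0 < t < 1) Th -> dmass Th t0 <> 0 ->
  (forall c, exists D, is_derive S0 c D) ->
  (forall c, 0 < c < 1 -> S0 c + e * even_kinks Th c = 0) -> e = 0.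
Proof.
  intros HTh Ht0 HS H.
  set (Lk := dscale (e / 2) Th).
  assert (EK : forall c, 0 < c < 1 -> kink_sum Lk c = - S0 c).
  { intros c Hc. specialize (H c Hc). unfold Lk, kink_sum. rewrite dint_scale.
    rewrite even_kinks_eq in H by (auto; lra). unfold kink_sum in H. lra. }
  assert (HK : forall s, 0 < s < 1 -> exists D, is_derive (kink_sum Lk) s D).
  { intros s Hs. destruct (HS s) as [D HD]. exists (- D).
    apply is_derive_ext_loc with (fun c => - S0 c).
    - apply (locally_interval _ s 0 1); simpl; try lra. intros y Hy1 Hy2. rewrite EK; auto.
    - apply (is_derive_opp (K:=R_AbsRing) (V:=R_NormedModule)), HD. }
  pose proof (dint_eq0_of_kink_sum_derivable Lk (supported_in_dscale _ _ _ HTh) HK (atom t0)) as Z.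
  unfold Lk in Z. rewrite dint_scale in Z. fold (dmass Th t0) in Z.
  apply Rmult_integral in Z. destruct Z; [lra | contradiction].
Qed.

(* The [k + 3] functions of [c] whose values on the measure [A] of the kinks
   of the new element control, respectively, [Q (new, g l)], the pairing of its
   even part with [Th], its value at [1], and its integral. *)
Definition probe (k : nat) (g : nat -> R -> R) (Th : dmeasure) (l : nat) (c : R) : R :=
  if Nat.ltb l k then tail_int (g l) c
  else if Nat.eqb l k then even_kinks Th c
  else if Nat.eqb l (S k) then 1 - c else (1 - c) ^ 2.

Lemma probe_lt k g Th l c : (l < k)%nat -> probe k g Th l c = tail_int (g l) c.
Proof. intros H. unfold probe. destruct (Nat.ltb_spec l k); [auto | lia]. Qed.

Lemma probe_k k g Th c : probe k g Th k c = even_kinks Th c.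
Proof. unfold probe. destruct (Nat.ltb_spec k k); [lia|]. rewrite Nat.eqb_refl. auto. Qed.

Lemma probe_Sk k g Th c : probe k g Th (S k) c = 1 - c.
Proof.
  unfold probe. destruct (Nat.ltb_spec (S k) k); [lia|]. destruct (Nat.eqb_spec (S k) k); [lia|].
  rewrite Nat.eqb_refl. auto.
Qed.

Lemma probe_SSk k g Th c : probe k g Th (S (S k)) c = (1 - c) ^ 2.
Proof.
  unfold probe. destruct (Nat.ltb_spec (S (S k)) k); [lia|].
  destruct (Nat.eqb_spec (S (S k)) k); [lia|]. destruct (Nat.eqb_spec (S (S k)) (S k)); [lia|]. auto.
Qed.

Lemma lincomb_probe k g Th d c : lincomb (S (S (S k))) d (probe k g Th) c =
  lincomb k d (fun l => tail_int (g l)) c + d k * even_kinks Th c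
  + (d (S k) * (1 - c) + d (S (S k)) * (1 - c) ^ 2).
Proof.
  simpl. rewrite probe_k, probe_Sk, probe_SSk, (lincomb_ext_h k d _ (fun l => tail_int (g l)));
    [ring|]. intros; apply probe_lt; auto.
Qed.

Lemma probe_independent k (g : nat -> R -> R) Th t0 :
  (forall i, (i < k)%nat -> inG0 (g i)) -> lin_indep_fin k (fun i => feven (g i)) ->
  supported_in (fun t => 0 < t < 1) Th -> dmass Th t0 <> 0 ->
  forall d, (forall c, interior c -> lincomb (S (S (S k))) d (probe k g Th) c = 0) ->
  forall l, (l < S (S (S k)))%nat -> d l = 0.
Proof.
  intros HG Hind HTh Ht0 d Hd.
  set (S0 := fun c => lincomb k d (fun l => tail_int (g l)) c
                      + (d (S k) * (1 - c) + d (S (S k)) * (1 - c) ^ 2)).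
  assert (Hdk : d k = 0).
  { apply (even_kinks_coef_eq0 Th t0 S0); auto.
    - intros c. eexists. apply is_derive_plus_R.
      + apply is_derive_lincomb. intros l Hl. apply is_derive_tail_int, inG_cont, HG, Hl.
      + auto_derive; auto.
    - intros c Hc. rewrite <- (Hd c) by (unfold interior; lra). rewrite lincomb_probe. unfold S0. ring. }
  destruct (tail_int_quadratic_independent k g d (d (S k)) (d (S (S k))) HG Hind) as [Hl [H1 H2]].
  { intros c Hc. rewrite <- (Hd c Hc), lincomb_probe, Hdk. ring. }
  intros l Hlt. destruct (Nat.lt_ge_cases l k); auto.
  assert (HH : l = k \/ l = S k \/ l = S (S k)) by lia.
  destruct HH as [-> | [-> | ->]]; auto.
Qed.

(** * One step of the extension *)

(* A measure on [(0,1)] that annihilates every [F i] but has an atom at [t0]: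
   put a unit mass at [t0], chosen to the right of the supports of an
   interpolation basis, and correct it with that basis. *)
Lemma annihilating_measure k (F : nat -> R -> R) :
  interpolating (fun t => 0 < t < 1) k F ->
  exists Th t0, supported_in (fun t => 0 < t < 1) Th /\
    (forall i, (i < k)%nat -> dint Th (F i) = 0) /\ dmass Th t0 = 1.
Proof.
  intros Hsurj. destruct (interpolation_basis _ _ _ Hsurj) as [B HB].
  destruct (point_right_of_support (dcomb k (fun _ => 1) B)) as [t0 [Ht0 Hpts]].
  { apply supported_in_dcomb. intros p _. apply (supported_in_impl (fun t => 0 < t < 1)).
    - intros; lra.
    - apply HB. }
  set (C := dcomb k (fun p => - F p t0) B).
  assert (HC : forall q, In q C -> 0 < snd q < t0).
  { intros q Hq. split.
    - apply (supported_in_dcomb (fun t => 0 < t < 1) k _ B) in Hq; [lra | intros; apply HB].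
    - revert q Hq. unfold C. clear -Hpts. induction k; simpl in *; [intros q []|].
      intros q Hq. apply in_app_or in Hq. destruct Hq as [Hq|Hq].
      + apply IHk; auto. intros p Hp. apply Hpts, in_or_app. left; auto.
      + unfold dscale in Hq. apply in_map_iff in Hq. destruct Hq as [p [<- Hp]].
        apply (Hpts (1 * fst p, snd p)), in_or_app. right. apply in_map_iff. eauto. }
  exists ((1, t0) :: C), t0. split; [|split].
  - intros q [<-|Hq]; [simpl; lra|]. specialize (HC q Hq). lra.
  - intros i Hi. simpl. unfold C. rewrite dint_dcomb_basis by (auto; intros; apply HB; auto). ring.
  - unfold dmass, atom. simpl. destruct (Req_EM_T t0 t0) as [_|]; [|congruence].
    rewrite (dint_ext C _ (fun _ => 0)), dint_zero; [ring|].
    intros q Hq. specialize (HC q Hq). destruct (Req_EM_T (snd q) t0); [lra | auto].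
Qed.

Lemma lin_indep_extend k (F : nat -> R -> R) (H : R -> R) Th :
  lin_indep_fin k F -> supported_in inI Th ->
  (forall i, (i < k)%nat -> dint Th (F i) = 0) -> dint Th H <> 0 ->
  lin_indep_fin (S k) (fun i => if Nat.eqb i k then H else F i).
Proof.
  intros Hind HTh HF HH c Hc.
  assert (Hrest : forall t, lincomb k c (fun i => if Nat.eqb i k then H else F i) t = lincomb k c F t).
  { intros t. apply lincomb_ext_h. intros j Hj. destruct (Nat.eqb_spec j k); [lia | auto]. }
  assert (Hck : c k = 0).
  { assert (Z : dint Th (lincomb (S k) c (fun i => if Nat.eqb i k then H else F i)) = 0).
    { rewrite (dint_ext _ _ (fun _ => 0)); [apply dint_zero | intros q Hq; apply Hc, HTh, Hq]. }
    simpl in Z. rewrite Nat.eqb_refl in Z.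
    rewrite (dint_ext Th _ (fun t => 1 * lincomb k c F t + c k * H t)), dint_lin,
      dint_lincomb_zero in Z by (auto; intros; rewrite Hrest; ring).
    rewrite Rmult_0_r, Rplus_0_l in Z. apply Rmult_integral in Z. destruct Z; [auto | contradiction]. }
  intros i Hi. destruct (Nat.eq_dec i k) as [->|Hik]; auto.
  apply Hind; [|lia]. intros t Ht. rewrite <- Hrest, <- (Hc t Ht). simpl.
  rewrite Hck. ring.
Qed.

Lemma probe_moments k (g : nat -> R -> R) Th (s : nat -> bool) :
  interpolating interior (S (S (S k))) (probe k g Th) ->
  exists A, supported_in interior A /\
    dint A (fun c => 1 - c) = 0 /\ dint A (fun c => (1 - c) ^ 2) = 0 /\
    dint A (even_kinks Th) = 1 /\
    forall i, (i < k)%nat -> dint A (fun c => RInt (g i) c 1) = if s i then -1 else 1.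
Proof.
  intros Hsurj.
  destruct (Hsurj (fun l => if Nat.ltb l k then (if s l then -1 else 1)
                           else if Nat.eqb l k then 1 else 0)) as [A [AP AV]].
  exists A. split; [exact AP | split; [|split; [|split]]].
  - rewrite <- (dint_ext A (probe k g Th (S k))), AV by (auto using probe_Sk).
    destruct (Nat.ltb_spec (S k) k); [lia|]. destruct (Nat.eqb_spec (S k) k); [lia | auto].
  - rewrite <- (dint_ext A (probe k g Th (S (S k)))), AV by (auto using probe_SSk).
    destruct (Nat.ltb_spec (S (S k)) k); [lia|]. destruct (Nat.eqb_spec (S (S k)) k); [lia | auto].
  - rewrite <- (dint_ext A (probe k g Th k)), AV by (auto using probe_k).
    destruct (Nat.ltb_spec k k); [lia|]. rewrite Nat.eqb_refl. auto.
  - intros i Hi. rewrite <- (dint_ext A (probe k g Th i)), AV by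
      (auto; intros p Hp; rewrite probe_lt, tail_int_eq by (auto; specialize (AP p Hp);
                                                              unfold interior, inI in *; lra); auto).
    destruct (Nat.ltb_spec i k); [auto | lia].
Qed.

Definition sign_pattern (b : bool) (x : R) : Prop := if b then x > 0 else x < 0.

Lemma extension_step k (g : nat -> R -> R) (s : nat -> bool) :
  (forall i, (i < k)%nat -> inG0 (g i)) -> lin_indep_fin k (fun i => feven (g i)) ->
  exists h, inG0 h /\
    (forall i, (i < k)%nat -> sign_pattern (s i) (Q h (g i))) /\
    lin_indep_fin (S k) (fun i => feven (if Nat.eqb i k then h else g i)).
Proof.
  intros HG Hind.
  set (F := fun i => feven (g i)).
  destruct (relation_or_interpolating (fun x => 0 < x < 1) F k) as [[d [[l [Hl Hdl]] Hs]] | Hsurj].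
  { exfalso. apply Hdl. apply (lin_indep_on_01 k F); auto.
    - intros i Hi. apply cont_I_feven, inG_cont, HG, Hi.
    - intros i t Hi. apply feven_opp.
    - intros i Hi. apply feven_inG_p1, HG, Hi. }
  destruct (annihilating_measure k F Hsurj) as [Th [t0 [ThP [ThF ThI]]]].
  destruct (relation_or_interpolating interior (probe k g Th) (S (S (S k))))
    as [[d [[l [Hl Hdl]] Hs]] | Hsurj2].
  { exfalso. apply Hdl. apply (probe_independent k g Th t0); auto. rewrite ThI. lra. }
  destruct (probe_moments k g Th s Hsurj2) as [A [AP [E1 [E2 [EK EG]]]]].
  pose proof (small_coef_pos A) as Hlam.
  exists (perturb A (small_coef A)). split; [|split].
  - apply perturb_inG0; auto.
  - intros i Hi. unfold sign_pattern. rewrite Q_perturb, E1, EG by auto. destruct (s i); nra.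
  - apply (lin_indep_fin_ext _ (fun i => if Nat.eqb i k then feven (perturb A (small_coef A)) else F i)).
    { intros i t _. destruct (Nat.eqb i k); reflexivity. }
    apply (lin_indep_extend k F _ Th Hind); [| exact ThF |].
    + apply (supported_in_impl (fun t => 0 < t < 1)); [unfold inI; intros; lra | exact ThP].
    + rewrite (dint_ext Th _ (fun t => small_coef A * dint A (fun c => feven (ramp c) t) + 0 * 0))
        by (intros; rewrite feven_perturb; ring).
      rewrite dint_lin, dint_zero, <- (dint_swap A Th (fun c t => feven (ramp c) t)).
      fold (even_kinks Th). rewrite EK. lra.
Qed.

(** * Universality from the extension property *)

Lemma tournament_flip {T : Type} (U : T -> T -> Prop) i j :
  is_tournament U -> i <> j -> (U i j <-> ~ U j i).
Proof. intros [_ HU] Hij. destruct (HU i j Hij) as [[H|H] H']; tauto. Qed.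

Fixpoint max_list {X : Type} (f : X -> nat) (l : list X) : nat :=
  match l with nil => O | y :: l' => Nat.max (f y) (max_list f l') end.

Lemma max_list_ge {X : Type} (f : X -> nat) l y : In y l -> (f y <= max_list f l)%nat.
Proof.
  induction l as [|a l IH]; simpl; intros H; [contradiction|].
  destruct H as [->|H]; [lia | specialize (IH H); lia].
Qed.

Definition update {X : Type} (psi : X -> nat) (x : X) (v : nat) (y : X) : nat :=
  if excluded_middle_informative (y = x) then v else psi y.

Section Universality.

Variable U : nat -> nat -> Prop.
Hypothesis HU : is_tournament U.
Hypothesis EP : forall (M : nat) (eps : nat -> bool), exists k, (M <= k)%nat /\
  forall i, (i < M)%nat -> (U i k <-> eps i = true).

Variables (X : Type) (Rel : X -> X -> Prop).
Hypothesis HR : is_tournament Rel.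

Lemma embedding_extend_one L psi x :
  embedding_on (fun y => In y L) Rel U psi ->
  exists v, embedding_on (fun y => In y (x :: L)) Rel U (update psi x v) /\ (In x L -> v = psi x).
Proof.
  intros [Hinj Hemb].
  destruct (classic (In x L)) as [HxL|HxL].
  { exists (psi x). split; [|auto].
    assert (E : forall y, update psi x (psi x) y = psi y)
      by (intros y; unfold update; destruct excluded_middle_informative as [->|]; auto).
    split; intros y z [Ey|Hy] [Ez|Hz]; try subst y; try subst z; rewrite ?E; auto. }
  set (eps := fun i => if excluded_middle_informative (exists y, In y L /\ psi y = i /\ Rel y x)
                       then true else false).
  destruct (EP (S (max_list psi L)) eps) as [v [Hv Hpat]].
  assert (Ux : update psi x v x = v) by (unfold update; destruct excluded_middle_informative; congruence).
  assert (Uy : forall y, In y L -> update psi x v y = psi y).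
  { intros y Hy. unfold update. destruct excluded_middle_informative as [->|]; [contradiction | auto]. }
  assert (Vbig : forall y, In y L -> (psi y < v)%nat) by (intros y Hy; pose proof (max_list_ge psi L y Hy); lia).
  assert (Rel_x : forall y, In y L -> (Rel y x <-> U (psi y) v)).
  { intros y Hy. rewrite Hpat by (pose proof (max_list_ge psi L y Hy); lia). unfold eps.
    destruct excluded_middle_informative as [[y' [Hy' [E' Hr]]]|Hn]; split; auto; try discriminate.
    - intros _. rewrite <- (Hinj y' y); auto.
    - intros Hr. exfalso. apply Hn. eauto. }
  exists v. split; [|tauto]. split.
  - intros y z [Ey|Hy] [Ez|Hz] EE; try subst y; try subst z; auto; rewrite ?Ux, ?Uy in EE by auto.
    + specialize (Vbig z Hz). lia.
    + specialize (Vbig y Hy). lia.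
    + apply Hinj; auto.
  - intros y z [Ey|Hy] [Ez|Hz]; try subst y; try subst z; rewrite ?Ux, ?Uy by auto.
    + split; intros Hxx; exfalso; [apply (proj1 HR x) | apply (proj1 HU v)]; auto.
    + assert (x <> z) by (intros ->; contradiction). assert (v <> psi z) by (specialize (Vbig z Hz); lia).
      rewrite (tournament_flip Rel x z), (tournament_flip U v (psi z)), Rel_x by auto. tauto.
    + apply Rel_x, Hy.
    + apply Hemb; auto.
Qed.

Variable c : X -> nat.
Hypothesis Hc : forall x y, c x = c y -> x = y.
Variables (l0 : list X) (phi : X -> nat).
Hypothesis Hphi : embedding_on (fun y => In y l0) Rel U phi.

Definition enum (j : nat) : option X :=
  match excluded_middle_informative (exists x, c x = j) with
  | left H => Some (proj1_sig (constructive_indefinite_description _ H))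
  | right _ => None
  end.

Lemma enum_spec j x : enum j = Some x <-> c x = j.
Proof.
  unfold enum. destruct excluded_middle_informative as [H|H].
  - destruct (constructive_indefinite_description _ H) as [y Hy]. simpl.
    split; [intros E; inversion E; subst; auto | intros E; f_equal; apply Hc; congruence].
  - split; [discriminate | intros E; exfalso; eauto].
Qed.

Definition next_value (L : list X) (psi : X -> nat) (x : X) : nat :=
  epsilon (inhabits O) (fun v => embedding_on (fun y => In y (x :: L)) Rel U (update psi x v)
                                 /\ (In x L -> v = psi x)).

Lemma next_value_spec L psi x : embedding_on (fun y => In y L) Rel U psi ->
  embedding_on (fun y => In y (x :: L)) Rel U (update psi x (next_value L psi x)) /\
  (In x L -> next_value L psi x = psi x).
Proof.
  intros H. unfold next_value.
  apply epsilon_spec, embedding_extend_one, H.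
Qed.

(* The embedding after the elements of [c]-index below [j] have been added. *)
Fixpoint stage (j : nat) : list X * (X -> nat) :=
  match j with
  | O => (l0, phi)
  | S j' => let (L, psi) := stage j' in
            match enum j' with
            | Some x => (x :: L, update psi x (next_value L psi x))
            | None => (L, psi)
            end
  end.

Lemma stage_embedding j : embedding_on (fun y => In y (fst (stage j))) Rel U (snd (stage j)).
Proof.
  induction j; simpl; [exact Hphi|]. destruct (stage j) as [L psi]. simpl in IHj.
  destruct (enum j) as [x|]; [|exact IHj].
  apply next_value_spec, IHj.
Qed.

Lemma stage_succ_stable j y : In y (fst (stage j)) ->
  In y (fst (stage (S j))) /\ snd (stage (S j)) y = snd (stage j) y.
Proof.
  intros Hy. pose proof (stage_embedding j) as Hemb. simpl. destruct (stage j) as [L psi].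
  simpl in *. destruct (enum j) as [x|]; [|auto]. simpl. split; [auto|].
  unfold update. destruct excluded_middle_informative as [->|]; [|auto].
  apply next_value_spec; [exact Hemb | exact Hy].
Qed.

Lemma stage_stable j j' y : (j <= j')%nat -> In y (fst (stage j)) ->
  In y (fst (stage j')) /\ snd (stage j') y = snd (stage j) y.
Proof.
  induction 1 as [|j' _ IH]; [auto|]. intros Hy. destruct (IH Hy) as [H1 H2].
  destruct (stage_succ_stable j' y H1). split; [auto | congruence].
Qed.

Lemma stage_contains y : In y (fst (stage (S (c y)))).
Proof.
  simpl. destruct (stage (c y)) as [L psi]. destruct (enum (c y)) as [x|] eqn:E.
  - apply enum_spec, Hc in E. subst. simpl; auto.
  - exfalso. assert (enum (c y) = Some y) by (apply enum_spec; auto). congruence.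
Qed.

Lemma stage_limit_embedding :
  exists psi, embedding_on (fun _ => True) Rel U psi /\ forall y, In y l0 -> psi y = phi y.
Proof.
  exists (fun y => snd (stage (S (c y))) y).
  assert (Lift : forall y J, (S (c y) <= J)%nat ->
            In y (fst (stage J)) /\ snd (stage J) y = snd (stage (S (c y))) y)
    by (intros; apply stage_stable; auto using stage_contains).
  split; [split|].
  - intros y z _ _ E. set (J := S (Nat.max (c y) (c z))).
    destruct (Lift y J) as [Hy Ey]; [lia|]. destruct (Lift z J) as [Hz Ez]; [lia|].
    apply (proj1 (stage_embedding J)); congruence.
  - intros y z _ _. set (J := S (Nat.max (c y) (c z))).
    destruct (Lift y J) as [Hy Ey]; [lia|]. destruct (Lift z J) as [Hz Ez]; [lia|].
    rewrite <- Ey, <- Ez. apply (proj2 (stage_embedding J)); auto.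
  - intros y Hy. apply (stage_stable 0 (S (c y)) y); [lia | exact Hy].
Qed.

End Universality.

Lemma universal_of_extension_property (U : nat -> nat -> Prop) : is_tournament U ->
  (forall (M : nat) (eps : nat -> bool), exists k, (M <= k)%nat /\
     forall i, (i < M)%nat -> (U i k <-> eps i = true)) ->
  universal_tournament U.
Proof.
  intros HU EP. split; [exact HU|].
  intros X Rel [c Hc] HR S0 phi [l0 Hl0] [Hinj Hemb].
  destruct (stage_limit_embedding U HU EP X Rel HR c Hc l0 phi) as [psi [Hpsi Hagree]].
  - split; intros y z Hy Hz; [apply Hinj | apply Hemb]; apply Hl0; auto.
  - exists psi. split; [exact Hpsi|]. intros y Hy. apply Hagree, Hl0, Hy.
Qed.

(** * Building the sequence *)

Section ChoiceSequence.

Variables (A : Type) (inhA : inhabited A).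
Variable P : nat -> (nat -> A) -> Prop.
Hypothesis P_local : forall m g g', (forall i, (i < m)%nat -> g i = g' i) -> P m g -> P m g'.
Hypothesis P_step : forall m g, P m g -> exists a, P (S m) (fun i => if Nat.eqb i m then a else g i).

Definition next_elem (m : nat) (g : nat -> A) : A :=
  epsilon inhA (fun a => P (S m) (fun i => if Nat.eqb i m then a else g i)).

Variables (n : nat) (f : nat -> A).

(* [approx j] extends [f] by [j] chosen elements, at positions [n], ..., [n + j - 1]. *)
Fixpoint approx (j : nat) : nat -> A :=
  match j with
  | O => f
  | S j' => fun i => if Nat.eqb i (n + j') then next_elem (n + j') (approx j') else approx j' i
  end.

Lemma approx_P j : P n f -> P (n + j) (approx j).
Proof.
  intros Hf. induction j; simpl; [rewrite Nat.add_0_r; exact Hf|].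
  rewrite Nat.add_succ_r. unfold next_elem. apply epsilon_spec, P_step, IHj.
Qed.

Lemma approx_stable j j' i : (i < n + j)%nat -> (j <= j')%nat -> approx j' i = approx j i.
Proof.
  intros Hi. induction 1 as [|j' Hle IH]; [reflexivity|]. simpl.
  destruct (Nat.eqb_spec i (n + j')); [lia | exact IH].
Qed.

Lemma choice_sequence : P n f ->
  exists g, (forall i, (i < n)%nat -> g i = f i) /\ forall m, (n <= m)%nat -> P m g.
Proof.
  intros Hf. exists (fun i => approx (S i) i).
  assert (Hlim : forall j i, (i < n + j)%nat -> approx (S i) i = approx j i).
  { intros j i Hi.
    rewrite <- (approx_stable j (Nat.max j (S i)) i), (approx_stable (S i) (Nat.max j (S i)) i); [reflexivity | lia ..]. }
  split.
  - intros i Hi. apply (Hlim 0%nat). lia.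
  - intros m Hm. apply (P_local m (approx (m - n))).
    + intros i Hi. symmetry. apply Hlim. lia.
    + replace m with (n + (m - n))%nat at 1 by lia. apply approx_P, Hf.
Qed.

End ChoiceSequence.

Lemma lin_indep_fin_le m N h : lin_indep_fin m h -> (N <= m)%nat -> lin_indep_fin N h.
Proof.
  intros Hm HN c Hc i Hi.
  set (c' := fun i => if Nat.ltb i N then c i else 0).
  assert (E : forall t, lincomb m c' h t = lincomb N c h t).
  { clear Hm. intros t. induction HN as [|m' Hle IH]; simpl.
    - apply lincomb_ext_c. intros j Hj. unfold c'. destruct (Nat.ltb_spec j N); [auto | lia].
    - rewrite IH. unfold c'. destruct (Nat.ltb_spec m' N); [lia | ring]. }
  assert (Z : c' i = 0) by (apply Hm; [intros t Ht; rewrite E; auto | lia]).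
  unfold c' in Z. destruct (Nat.ltb_spec i N); [auto | lia].
Qed.

Definition good_prefix (n : nat) (sig : nat -> nat -> bool) (m : nat) (g : nat -> R -> R) : Prop :=
  (forall i, (i < m)%nat -> inG0 (g i)) /\ lin_indep_fin m (fun i => feven (g i)) /\
  (forall k i, (n <= k < m)%nat -> (i < k)%nat -> sign_pattern (sig k i) (Q (g k) (g i))).

Lemma extension_sequence n f (sig : nat -> nat -> bool) : strongly_generic n f ->
  exists g : nat -> R -> R, (forall i, (i < n)%nat -> g i = f i) /\ (forall i, inG0 (g i)) /\
    lin_indep_inf (fun i => feven (g i)) /\
    (forall k i, (n <= k)%nat -> (i < k)%nat -> sign_pattern (sig k i) (Q (g k) (g i))).
Proof.
  intros [HG [Hind _]].
  destruct (choice_sequence (R -> R) (inhabits (fun x => x)) (good_prefix n sig)) with n f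
    as [g [Hpre Hgood]].
  - intros m g g' E [H1 [H2 H3]]. split; [|split].
    + intros i Hi. rewrite <- E; auto.
    + apply (lin_indep_fin_ext m (fun i => feven (g i))); auto. intros i t Hi. rewrite E; auto.
    + intros k i Hk Hi. rewrite <- (E k), <- (E i) by lia. auto.
  - intros m g [H1 [H2 H3]].
    destruct (extension_step m g (sig m) H1 H2) as [h [Hh [HQ Hlin]]].
    exists h. split; [|split].
    + intros i Hi. destruct (Nat.eqb_spec i m); auto. apply H1. lia.
    + exact Hlin.
    + intros k i Hk Hi. destruct (Nat.eqb_spec i m); [lia|].
      destruct (Nat.eqb_spec k m) as [->|]; [apply HQ; auto | apply H3; lia].
  - split; [exact HG | split; [exact Hind | intros; lia]].
  - exists g. split; [exact Hpre|]. split; [|split].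
    + intros i. apply (Hgood (S (Nat.max i n))); lia.
    + intros N. apply (lin_indep_fin_le (Nat.max N n)); [apply Hgood | ]; lia.
    + intros k i Hk Hi. apply (Hgood (S k)); lia.
Qed.

Lemma Q_ne0 g n : (forall i, inG (g i)) ->
  (forall i j, (i < n)%nat -> (j < n)%nat -> i <> j -> Q (g i) (g j) <> 0) ->
  (forall k i, (n <= k)%nat -> (i < k)%nat -> Q (g k) (g i) <> 0) ->
  forall i j, i <> j -> Q (g i) (g j) <> 0.
Proof.
  intros HG Hpre Hlate i j Hij.
  assert (Hanti : Q (g i) (g j) = - Q (g j) (g i)) by (pose proof (Q_antisym (g i) (g j) (HG i) (HG j)); lra).
  destruct (Nat.lt_ge_cases i n), (Nat.lt_ge_cases j n); [auto | | |].
  - rewrite Hanti. specialize (Hlate j i ltac:(lia) ltac:(lia)). lra.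
  - apply Hlate; lia.
  - destruct (Nat.lt_ge_cases i j); [|apply Hlate; lia].
    rewrite Hanti. specialize (Hlate j i ltac:(lia) ltac:(lia)). lra.
Qed.

Lemma Gamma_on_tournament g : (forall i, inG (g i)) ->
  (forall i j, i <> j -> Q (g i) (g j) <> 0) -> is_tournament (Gamma_on g).
Proof.
  intros HG HQ. unfold Gamma_on. split; [intros i [H _]; auto|].
  intros i j Hij. pose proof (HQ j i (not_eq_sym Hij)).
  pose proof (Q_antisym (g j) (g i) (HG j) (HG i)).
  split; [destruct (Rlt_dec 0 (Q (g j) (g i))); [left | right]; split; auto; lra|].
  intros [[_ A1] [_ A2]]. lra.
Qed.

Lemma testbit_pattern (M : nat) (eps : nat -> bool) :
  exists b, forall i, (i < M)%nat -> Nat.testbit b i = eps i.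
Proof.
  induction M as [|M [b Hb]]; [exists O; intros; lia|].
  exists (if eps M then Nat.setbit b M else Nat.clearbit b M). intros i Hi.
  destruct (Nat.eq_dec i M) as [->|Hne].
  - destruct (eps M); [apply Nat.setbit_eq | apply Nat.clearbit_eq].
  - destruct (eps M); [rewrite Nat.setbit_neq | rewrite Nat.clearbit_neq]; auto; apply Hb; lia.
Qed.

(* Position [n + to_nat (M, b)] is scheduled to realise the pattern given by
   the first [M] bits of [b]; through the Cantor pairing every finite pattern
   is scheduled at some position [>= M]. *)
Definition schedule (n k i : nat) : bool :=
  let (M, b) := Cantor.of_nat (k - n) in if Nat.ltb i M then Nat.testbit b i else true.

Lemma Gamma_on_extension_property g n :
  (forall k i, (n <= k)%nat -> (i < k)%nat -> sign_pattern (schedule n k i) (Q (g k) (g i))) ->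
  forall (M : nat) (eps : nat -> bool), exists k, (M <= k)%nat /\
    forall i, (i < M)%nat -> (Gamma_on g i k <-> eps i = true).
Proof.
  intros Hsig M eps. destruct (testbit_pattern M eps) as [b Hb].
  pose proof (Cantor.to_nat_non_decreasing M b) as HMb.
  exists (n + Cantor.to_nat (M, b))%nat. split; [lia|]. intros i Hi.
  assert (Hs : schedule n (n + Cantor.to_nat (M, b)) i = eps i).
  { unfold schedule. replace (n + Cantor.to_nat (M, b) - n)%nat with (Cantor.to_nat (M, b)) by lia.
    rewrite Cantor.cancel_of_to. destruct (Nat.ltb_spec i M); [auto | lia]. }
  specialize (Hsig (n + Cantor.to_nat (M, b))%nat i ltac:(lia) ltac:(lia)).
  rewrite Hs in Hsig. unfold Gamma_on, sign_pattern in *.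
  destruct (eps i).
  - split; [auto | intros _; split; [lia | exact Hsig]].
  - split; [intros [_ Hpos]; lra | discriminate].
Qed.

Theorem theorem5p11 (n : nat) (f : nat -> R -> R) :
  strongly_generic n f ->
  exists g : nat -> R -> R,
    (forall i, (i < n)%nat -> g i = f i) /\
    (forall i, inG0 (g i)) /\
    lin_indep_inf (fun i => feven (g i)) /\
    universal_tournament (Gamma_on g).
Proof.
  intros Hf.
  destruct (extension_sequence n f (schedule n) Hf) as [g [Hpre [HG [Hind Hsig]]]].
  assert (HG' : forall i, inG (g i)) by (intros; apply HG).
  exists g. split; [exact Hpre | split; [exact HG | split; [exact Hind|]]].
  apply universal_of_extension_property.
  - apply Gamma_on_tournament; [exact HG'|]. apply (Q_ne0 g n HG').
    + intros i j Hi Hj. rewrite !Hpre by auto. apply Hf; auto.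
    + intros k i Hk Hi. specialize (Hsig k i Hk Hi). unfold sign_pattern in Hsig.
      destruct (schedule n k i); lra.
  - apply (Gamma_on_extension_property g n), Hsig.
Qed.
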